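(* The logic $\mathbf{DL}(\partial^* )$ can simulate $\mathbf{DL}(\partial)$ with respect to addition of rules, and the logic $\mathbf{DL}(\delta^* )$ can simulate $\mathbf{DL}(\delta)$ with respect to addition of rules. Explicitly, for $(d_1,d_2)\in\{(\partial,\partial^* ),(\delta,\delta^* )\}$ and for every defeasible theory $D$, there is a defeasible theory $D'$ with the following property. For every theory $A=(\emptyset,R_A,\emptyset)$ consisting only of rules that is modular with respect to $D$ and $D'$, and for every literal $q\in\Sigma(D+A)$: - $D+A\vdash+d_1q$ iff $D'+A\vdash+d_2q$, and - $D+A\vdash-d_1q$ iff $D'+A\vdash-d_2q$.
   Context: Defeasible theories. Literals come from a language closed under negation. For a literal $q$, its complement ${\sim}q$ is $\neg p$ if $q=p$ is a proposition, and $p$ if $q=\neg p$. A defeasible theory $D=(F,R,>)$ consists of: - a set $F$ of literals (the facts); - a finite set $R$ of rules, each with a distinct label; - an acyclic binary relation $>$ on labels (the superiority relation). Each rule $r$ has a finite set $A(r)$ of body literals and a head literal. A rule is one of: - strict ($\rightarrow$); - defeasible ($\Rightarrow$); - a defeater ($\leadsto$). Notation: $R_s$ is the set of strict rules, $R_{sd}$ the set of strict or defeasible rules, and $R[q]$, $R_s[q]$, $R_{sd}[q]$ are the corresponding sets of rules with head $q$. $\Sigma(D)$ and $\Lambda(D)$ are the literals and the labels occurring in $D$. Conclusions. Conclusions have the form $\pm d\,q$ for a tag $d\in\{\Delta,\partial,\partial^*,\delta,\sigma,\delta^*,\sigma^*\}$. The conclusions of $D$ are $\bigcup_n\mathcal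 T_D\uparrow n$, where $\mathcal T_D\uparrow 0=\emptyset$ and $\mathcal T_D\uparrow(n+1)=\mathcal T_D(\mathcal T_D\uparrow n)$. We write $D\vdash\alpha$ when $\alpha$ is a conclusion of $D$. For a set $B$ of literals, ''$+dB\subseteq E$'' means $+d\,a\in E$ for all $a\in B$. The operator $\mathcal T_D$ is defined by the following clauses. $+\Delta q\in\mathcal T_D(E)$ iff $q\in F$, or some $r\in R_s[q]$ has $+\Delta A(r)\subseteq E$. $-\Delta q\in\mathcal T_D(E)$ iff $q\notin F$ and every $r\in R_s[q]$ has some $a\in A(r)$ with $-\Delta a\in E$. $+\partial q\in\mathcal T_D(E)$ iff either $+\Delta q\in E$, or all of the following hold: - some $r\in R_{sd}[q]$ has $+\partial A(r)\subseteq E$; - $-\Delta{\sim}q\in E$; - every $s\in R[{\sim}q]$ either has some $a\in A(s)$ with $-\partial a\in E$, or there is $t\in R_{sd}[q]$ with $+\partial A(t)\subseteq E$ and $t>s$. $-\partial q\in\mathcal T_D(E)$ iff $-\Delta q\in E$ and one of the following holds: - every $r\in R_{sd}[q]$ has some $a\in A(r)$ with $-\partial a\in E$; - $+\Delta{\sim}q\in E$; - some $s\in R[{\sim}q]$ has $+\partial A(s)\subseteq E$ and every $t\in R_{sd}[q]$ has some $a\in A(t)$ with $-\partial a\in E$ or not $t>s$. $+\partial^*q\in\mathcal T_D(E)$ iff either $+\Delta q\in E$, or some $r\in R_{sd}[q]$ satisfies: - $+\partial^*A(r)\subseteq E$; - $-\Delta{\sim}q\in E$; - every $s\in R[{\sim}q]$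 has some $a\in A(s)$ with $-\partial^*a\in E$, or $r>s$. $-\partial^*q\in\mathcal T_D(E)$ iff $-\Delta q\in E$ and every $r\in R_{sd}[q]$ satisfies one of: - some $a\in A(r)$ has $-\partial^*a\in E$; - $+\Delta{\sim}q\in E$; - some $s\in R[{\sim}q]$ has $+\partial^*A(s)\subseteq E$ and not $r>s$. $\pm\delta$ are defined exactly as $\pm\partial$, with $\partial$ replaced by $\delta$, with two exceptions. In the $+\delta$ clause, the escape for $s$ is ''some $a\in A(s)$ has $-\sigma a\in E$''. In the $-\delta$ clause, the condition on $s$ is ''$+\sigma A(s)\subseteq E$''. $+\sigma q\in\mathcal T_D(E)$ iff either $+\Delta q\in E$, or some $r\in R_{sd}[q]$ has $+\sigma A(r)\subseteq E$ and every $s\in R[{\sim}q]$ has some $a\in A(s)$ with $-\delta a\in E$ or not $s>r$. $-\sigma q\in\mathcal T_D(E)$ iff $-\Delta q\in E$ and every $r\in R_{sd}[q]$ has some $a\in A(r)$ with $-\sigma a\in E$, or there is $s\in R[{\sim}q]$ with $+\delta A(s)\subseteq E$ and $s>r$. $\pm\delta^*$ are defined exactly as $\pm\partial^*$, with $\partial^*$ replaced by $\delta^*$, with two exceptions. In the $+\delta^*$ clause, the escape for $s$ is ''some $a\in A(s)$ has $-\sigma^*a\in E$''. In the $-\delta^*$ clause, the condition on $s$ is ''$+\sigma^*A(s)\subseteq E$''. $\pm\sigma^*$ are defined exactly as $\pm\sigma$, with $\sigma,\delta$ replaced by $\sigma^*,\delta^*$ respectively. $\mathbf{DL}(d)$ denotes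 the logic with principal tag $d$. Addition. For theories $D=(F,R,>)$ and $A=(F',R',>')$ with disjoint label sets, define $D+A=(F\cup F',R\cup R',>\cup>')$. Given theories $D_1,D_2$, an addition $A$ is modular if - $\Sigma(A)\cap\Sigma(D_2)\subseteq\Sigma(D_1)$, - $\Lambda(D_1)\cap\Lambda(A)=\emptyset$, and - $\Lambda(D_2)\cap\Lambda(A)=\emptyset$. Simulation. $\mathbf{DL}(d_1)$ can be simulated by $\mathbf{DL}(d_2)$ with respect to addition of rules if every theory $D_1$ has a theory $D_2$ such that, for every modular addition $A$ of the form $(\emptyset,R,\emptyset)$ and every $q\in\Sigma(D_1+A)$: - $D_1+A\vdash\pm d_1q$ iff $D_2+A\vdash\pm d_2q$ (same sign). *)

From Stdlib Require Import List Relations.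
Import ListNotations.

(* Propositions (atoms) and rule labels are natural numbers: both are
   countably infinite, so fresh atoms/labels are always available. *)
Definition atom := nat.
Definition label := nat.

Inductive literal : Type := Pos (p : atom) | Neg (p : atom).

Definition compl (q : literal) : literal :=
  match q with Pos p => Neg p | Neg p => Pos p end.

Inductive rkind : Type := Strict | Defeasible | Defeater.

Record rule : Type := mkRule {
  rlabel : label;
  rbody  : list literal;
  rhead  : literal;
  rkd    : rkind }.

Record theory : Type := mkTheory {
  facts : list literal;
  rules : list rule;
  sup   : list (label * label) }.  (* > : (a,b) means a > b *)

Definition acyclic (s : list (label * label)) : Prop :=
  forall x, ~ clos_trans label (fun a b => In (a, b) s) x x.

Definition wf_theory (D : theory) : Prop :=
  NoDup (map rlabel (rules D)) /\ acyclic (sup D).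

Definition Sigma (D : theory) : list literal :=
  facts D ++ flat_map (fun r => rhead r :: rbody r) (rules D).
Definition Lambda (D : theory) : list label :=
  map rlabel (rules D) ++ flat_map (fun p => [fst p; snd p]) (sup D).

Definition add (D A : theory) : theory :=
  mkTheory (facts D ++ facts A) (rules D ++ rules A) (sup D ++ sup A).

Inductive tag : Type :=
  | tDelta
  | tPartial
  | tPartialS
  | tdelta
  | tsigma
  | tdeltaS
  | tsigmaS.

Inductive sign : Type := Plus | Minus.

Definition concl := (sign * tag * literal)%type.

Section Operator.
Variable D : theory.
Variable E : concl -> Prop.

Definition is_sd (r : rule) : Prop := rkd r = Strict \/ rkd r = Defeasible.
Definition inR (q : literal) (r : rule) : Prop := In r (rules D) /\ rhead r = q.
Definition inRs (q : literal) (r : rule) : Prop := inR q r /\ rkd r = Strict.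
Definition inRsd (q : literal) (r : rule) : Prop := inR q r /\ is_sd r.
Definition sgt (r s : rule) : Prop := In (rlabel r, rlabel s) (sup D).

Definition allP (s : sign) (t : tag) (r : rule) : Prop :=
  forall a, In a (rbody r) -> E (s, t, a).
Definition someM (t : tag) (r : rule) : Prop :=
  exists a, In a (rbody r) /\ E (Minus, t, a).

Definition plus_amb (t t' : tag) (q : literal) : Prop :=
  E (Plus, tDelta, q) \/
  ((exists r, inRsd q r /\ allP Plus t r) /\
   E (Minus, tDelta, compl q) /\
   (forall s, inR (compl q) s ->
      someM t' s \/ exists u, inRsd q u /\ allP Plus t u /\ sgt u s)).

Definition minus_amb (t t' : tag) (q : literal) : Prop :=
  E (Minus, tDelta, q) /\
  ((forall r, inRsd q r -> someM t r) \/
   E (Plus, tDelta, compl q) \/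
   (exists s, inR (compl q) s /\ allP Plus t' s /\
      forall u, inRsd q u -> someM t u \/ ~ sgt u s)).

Definition plus_star (t t' : tag) (q : literal) : Prop :=
  E (Plus, tDelta, q) \/
  (exists r, inRsd q r /\ allP Plus t r /\ E (Minus, tDelta, compl q) /\
     forall s, inR (compl q) s -> someM t' s \/ sgt r s).

Definition minus_star (t t' : tag) (q : literal) : Prop :=
  E (Minus, tDelta, q) /\
  (forall r, inRsd q r ->
     someM t r \/ E (Plus, tDelta, compl q) \/
     exists s, inR (compl q) s /\ allP Plus t' s /\ ~ sgt r s).

Definition plus_sup (t t' : tag) (q : literal) : Prop :=
  E (Plus, tDelta, q) \/
  (exists r, inRsd q r /\ allP Plus t r /\
     forall s, inR (compl q) s -> someM t' s \/ ~ sgt s r).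

Definition minus_sup (t t' : tag) (q : literal) : Prop :=
  E (Minus, tDelta, q) /\
  (forall r, inRsd q r ->
     someM t r \/ exists s, inR (compl q) s /\ allP Plus t' s /\ sgt s r).

Definition TD (c : concl) : Prop :=
  match c with
  | (Plus, tDelta, q) => In q (facts D) \/ exists r, inRs q r /\ allP Plus tDelta r
  | (Minus, tDelta, q) => ~ In q (facts D) /\ forall r, inRs q r -> someM tDelta r
  | (Plus, tPartial, q) => plus_amb tPartial tPartial q
  | (Minus, tPartial, q) => minus_amb tPartial tPartial q
  | (Plus, tdelta, q) => plus_amb tdelta tsigma q
  | (Minus, tdelta, q) => minus_amb tdelta tsigma q
  | (Plus, tPartialS, q) => plus_star tPartialS tPartialS q
  | (Minus, tPartialS, q) => minus_star tPartialS tPartialS q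
  | (Plus, tdeltaS, q) => plus_star tdeltaS tsigmaS q
  | (Minus, tdeltaS, q) => minus_star tdeltaS tsigmaS q
  | (Plus, tsigma, q) => plus_sup tsigma tdelta q
  | (Minus, tsigma, q) => minus_sup tsigma tdelta q
  | (Plus, tsigmaS, q) => plus_sup tsigmaS tdeltaS q
  | (Minus, tsigmaS, q) => minus_sup tsigmaS tdeltaS q
  end.
End Operator.

Fixpoint iterT (D : theory) (n : nat) : concl -> Prop :=
  match n with
  | 0 => fun _ => False
  | S m => TD D (iterT D m)
  end.

Definition proves (D : theory) (c : concl) : Prop := exists n, iterT D n c.

Definition modular (D1 D2 A : theory) : Prop :=
  (forall q, In q (Sigma A) -> In q (Sigma D2) -> In q (Sigma D1)) /\
  (forall l, In l (Lambda D1) -> ~ In l (Lambda A)) /\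
  (forall l, In l (Lambda D2) -> ~ In l (Lambda A)).

Definition simulates (d1 d2 : tag) : Prop :=
  forall D1 : theory, wf_theory D1 ->
  exists D2 : theory, wf_theory D2 /\
    forall RA : list rule,
      let A := mkTheory [] RA [] in
      wf_theory A -> modular D1 D2 A ->
      forall q, In q (Sigma (add D1 A)) ->
        (proves (add D1 A) (Plus, d1, q) <-> proves (add D2 A) (Plus, d2, q)) /\
        (proves (add D1 A) (Minus, d1, q) <-> proves (add D2 A) (Minus, d2, q)).

(* In DL(∂) a literal is proved by a team of rules that together override
   every applicable attacker, whereas the logic ∂* asks a single rule to do
   so.  The simulating theory adds, for each rule [x] of [D], fresh literals
   saying that [x] is countered (inapplicable, or overridden by an applicable
   superior rule) and that [x] is unbeaten (no applicable attacker overrides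
   it), each computed by a few defeasible gadget rules, together with a team
   rule for [x] superior to all of [D].  Climbing the acyclic superiority
   relation, a winning team contains an unbeaten member whose team rule then
   wins alone; conversely a defeated team rule exhibits an attack that no
   member of the team overrides.  A level-by-level induction on [T_D] thus
   matches the ∂/δ/σ conclusions of [D + A] with the starred ones
   of the new theory plus [A] on all non-fresh literals; modularity keeps the
   fresh atoms and labels out of [A]. *)

From Stdlib Require Import List Relations Lia Arith Bool Classical ClassicalEpsilon
  Wellfounded.Inclusion.
Import ListNotations.

(** * Locality of the proof operator *)

Definition relevant (D : theory) (q : literal) (c : concl) : Prop :=
  let '(_, _, a) := c in
  a = q \/ a = compl q \/ exists r, In r (rules D) /\ In a (rbody r).

Section Locality.
Variables (D : theory) (q : literal) (E E' : concl -> Prop).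
Hypothesis agree : forall c, relevant D q c -> E c -> E' c.

Lemma allP_local s t r : In r (rules D) -> allP E s t r -> allP E' s t r.
Proof. intros hr h a ha; apply agree; [right; right; eauto|auto]. Qed.

Lemma someM_local t r : In r (rules D) -> someM E t r -> someM E' t r.
Proof. intros hr [a [ha h]]; exists a; split; [|apply agree; [right; right|]]; eauto. Qed.

Lemma at_lit_local s t : E (s, t, q) -> E' (s, t, q).
Proof. apply agree; left; auto. Qed.

Lemma at_compl_local s t : E (s, t, compl q) -> E' (s, t, compl q).
Proof. apply agree; right; left; auto. Qed.

Local Hint Resolve allP_local someM_local at_lit_local at_compl_local : local.
Local Hint Extern 1 (In ?r (rules D)) =>
  match goal with
  | h : inR D _ r |- _ => exact (proj1 h)
  | h : inRsd D _ r |- _ => exact (proj1 (proj1 h))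
  | h : inRs D _ r |- _ => exact (proj1 (proj1 h))
  end : local.

Lemma plus_amb_local t t' : plus_amb D E t t' q -> plus_amb D E' t t' q.
Proof.
  intros [h|[[r [hr hb]] [hD hatt]]]; [left; auto with local|right].
  split; [exists r; eauto with local|split; [auto with local|]].
  intros s hs; destruct (hatt s hs) as [h|[u [hu [hub hus]]]];
    [left|right; exists u]; eauto 6 with local.
Qed.

Lemma minus_amb_local t t' : minus_amb D E t t' q -> minus_amb D E' t t' q.
Proof.
  intros [hD h]; split; [auto with local|].
  destruct h as [h|[h|[s [hs [hsb hatt]]]]].
  - left; intros r hr; eauto with local.
  - right; left; auto with local.
  - right; right; exists s; split; [|split]; eauto with local.
    intros u hu; destruct (hatt u hu); eauto with local.
Qed.

Lemma plus_star_local t t' : plus_star D E t t' q -> plus_star D E' t t' q.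
Proof.
  intros [h|[r [hr [hb [hD hatt]]]]]; [left; auto with local|right].
  exists r; split; [|split; [|split]]; eauto with local.
  intros s hs; destruct (hatt s hs); eauto with local.
Qed.

Lemma minus_star_local t t' : minus_star D E t t' q -> minus_star D E' t t' q.
Proof.
  intros [hD h]; split; auto with local.
  intros r hr; destruct (h r hr) as [h1|[h1|[s [hs [hsb hsr]]]]];
    [left|right; left|right; right; exists s]; eauto with local.
Qed.

Lemma plus_sup_local t t' : plus_sup D E t t' q -> plus_sup D E' t t' q.
Proof.
  intros [h|[r [hr [hb hatt]]]]; [left; auto with local|right].
  exists r; split; [|split]; eauto with local.
  intros s hs; destruct (hatt s hs); eauto with local.
Qed.

Lemma minus_sup_local t t' : minus_sup D E t t' q -> minus_sup D E' t t' q.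
Proof.
  intros [hD h]; split; auto with local.
  intros r hr; destruct (h r hr) as [h1|[s [hs [hsb hsr]]]];
    [left|right; exists s]; eauto with local.
Qed.

Lemma TD_local s t : TD D E (s, t, q) -> TD D E' (s, t, q).
Proof.
  destruct s, t; simpl;
    auto using plus_amb_local, minus_amb_local, plus_star_local, minus_star_local,
      plus_sup_local, minus_sup_local.
  - intros [h|[r [hr hb]]]; [left|right; exists r]; eauto with local.
  - intros [hF h]; split; [auto|intros r hr; eauto with local].
Qed.
End Locality.

Lemma TD_mono D (E E' : concl -> Prop) c :
  (forall c, E c -> E' c) -> TD D E c -> TD D E' c.
Proof. destruct c as [[s t] q]; intros h; apply (TD_local D q); auto. Qed.

Lemma iterT_succ D n c : iterT D n c -> iterT D (S n) c.
Proof.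
  revert c; induction n as [|n IH]; simpl; intros c h; [contradiction|].
  exact (TD_mono D _ _ c IH h).
Qed.

Lemma iterT_mono D n m c : n <= m -> iterT D n c -> iterT D m c.
Proof. induction 1; auto using iterT_succ. Qed.

Lemma proves_common_level D (L : list concl) :
  exists n, forall c, In c L -> proves D c -> iterT D n c.
Proof.
  induction L as [|c L [n IH]].
  - exists 0; intros c [].
  - destruct (classic (proves D c)) as [[m hm]|hn].
    + exists (max n m); intros c' [<-|hc'] hp.
      * apply (iterT_mono D m); [lia|exact hm].
      * apply (iterT_mono D n); [lia|auto].
    + exists n; intros c' [<-|hc'] hp; [contradiction|auto].
Qed.

Definition all_tags : list tag :=
  [tDelta; tPartial; tPartialS; tdelta; tsigma; tdeltaS; tsigmaS].

Definition relevant_concls (D : theory) (q : literal) : list concl :=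
  flat_map (fun s => flat_map (fun t => map (fun a => (s, t, a))
     (q :: compl q :: flat_map rbody (rules D))) all_tags) [Plus; Minus].

Lemma in_relevant_concls D q c : relevant D q c -> In c (relevant_concls D q).
Proof.
  destruct c as [[s t] a]; intros h.
  apply in_flat_map; exists s; split; [destruct s; simpl; tauto|].
  apply in_flat_map; exists t; split; [destruct t; simpl; tauto|].
  apply in_map_iff; exists a; split; auto.
  destruct h as [h|[h|[r [h1 h2]]]]; simpl; auto.
  right; right; apply in_flat_map; eauto.
Qed.

(* T_D only inspects the finitely many conclusions relevant to the literal at
   hand, so all of them are available at a single finite stage. *)
Lemma proves_closed D c : TD D (proves D) c -> proves D c.
Proof.
  destruct c as [[s t] q]; intros h.
  destruct (proves_common_level D (relevant_concls D q)) as [n hn].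
  exists (S n); apply (TD_local D q (proves D)); [|exact h].
  intros c hc hp; apply hn; auto using in_relevant_concls.
Qed.

Definition star_tags (t t' : tag) : Prop := forall D E a,
  (TD D E (Plus, t, a) <-> plus_star D E t t' a) /\ (TD D E (Minus, t, a) <-> minus_star D E t t' a).

Lemma star_tags_partialS : star_tags tPartialS tPartialS.
Proof. split; reflexivity. Qed.
Lemma star_tags_deltaS : star_tags tdeltaS tsigmaS.
Proof. split; reflexivity. Qed.

(** * Induction along an acyclic superiority relation *)

Lemma filter_length_lt {X} (L : list X) (f g : X -> bool) :
  (forall z, f z = true -> g z = true) ->
  (exists z, In z L /\ g z = true /\ f z = false) ->
  length (filter f L) < length (filter g L).
Proof.
  intros hfg. induction L as [|a L IH]; intros [z [hz [h1 h2]]]; [destruct hz|].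
  simpl. destruct hz as [<-|hz].
  - rewrite h1, h2; simpl.
    assert (length (filter f L) <= length (filter g L)).
    { clear -hfg. induction L as [|b L IH]; simpl; auto.
      destruct (f b) eqn:e; [rewrite (hfg _ e); simpl; lia|destruct (g b); simpl; lia]. }
    lia.
  - assert (length (filter f L) < length (filter g L)) by (apply IH; eauto).
    destruct (f a) eqn:e; [rewrite (hfg _ e); simpl; lia|destruct (g a); simpl; lia].
Qed.

Section AcyclicWf.
Variable s : list (label * label).
Hypothesis acy : acyclic s.
Let above := clos_trans label (fun a b => In (a, b) s).

Definition count_above (x : label) : nat :=
  length (filter (fun z => if excluded_middle_informative (above z x) then true else false)
            (map fst s)).

Lemma above_in_domain y x : above y x -> In y (map fst s).
Proof.
  induction 1 as [a b h|a b c h1 IH1 h2 IH2]; auto.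
  apply in_map_iff; exists (a, b); auto.
Qed.

Lemma count_above_lt y x : above y x -> count_above y < count_above x.
Proof.
  intros h; apply filter_length_lt.
  - intros z. destruct (excluded_middle_informative _) as [h1|h1]; [|discriminate].
    intros _. destruct (excluded_middle_informative _) as [h2|h2]; auto.
    exfalso; apply h2; eapply t_trans; eauto.
  - exists y; split; [eapply above_in_domain; eauto|].
    destruct (excluded_middle_informative (above y x)); [|contradiction].
    destruct (excluded_middle_informative (above y y)) as [h2|]; auto.
    exfalso; exact (acy y h2).
Qed.

Lemma acyclic_above_wf : well_founded (fun y x => above y x).
Proof.
  apply (wf_incl _ _ (fun y x => count_above y < count_above x)).
  - exact count_above_lt.
  - apply (well_founded_ltof _ count_above).
Qed.
End AcyclicWf.

Lemma superiority_ind (D : theory) (P : rule -> Prop) : acyclic (sup D) ->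
  (forall w, In w (rules D) ->
     (forall w', In w' (rules D) ->
        clos_trans label (fun a b => In (a, b) (sup D)) (rlabel w') (rlabel w) -> P w') ->
     P w) ->
  forall w, In w (rules D) -> P w.
Proof.
  intros acy H w. remember (rlabel w) as l. revert w Heql.
  induction l as [l IH] using (well_founded_induction (acyclic_above_wf _ acy)).
  intros w -> hw. apply H; auto. intros w' hw' hc. eapply IH; eauto.
Qed.

(** * The simulating theory *)

Definition atom_of (l : literal) : atom := match l with Pos p | Neg p => p end.

Definition label_bound (D : theory) : nat := S (list_max (Lambda D)).
Definition atom_bound (D : theory) : nat := S (list_max (map atom_of (Sigma D))).

(* Fresh labels are the base-[M] numerals [k i j] with [k >= 1]; fresh atoms
   lie above every atom of [D]. *)
Definition glabel (M k i j : nat) : nat := (k * M + i) * M + j.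
Definition counter_atom (D : theory) (x : rule) : atom := atom_bound D + 2 * rlabel x.
Definition unbeaten_atom (D : theory) (x : rule) : atom := S (atom_bound D + 2 * rlabel x).

Definition lit_eq_dec (a b : literal) : {a = b} + {a <> b}.
Proof. decide equality; apply Nat.eq_dec. Defined.
Definition rkind_eq_dec (a b : rkind) : {a = b} + {a <> b}.
Proof. decide equality. Defined.
Definition rule_eq_dec (a b : rule) : {a = b} + {a <> b}.
Proof. decide equality; auto using lit_eq_dec, rkind_eq_dec, Nat.eq_dec, list_eq_dec. Defined.
Definition label_pair_eq_dec (a b : label * label) : {a = b} + {a <> b}.
Proof. decide equality; apply Nat.eq_dec. Defined.

Definition lit_eqb (a b : literal) : bool := if lit_eq_dec a b then true else false.
Definition is_sdb (r : rule) : bool := match rkd r with Defeater => false | _ => true end.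
Definition supb (D : theory) (a b : label) : bool :=
  if in_dec label_pair_eq_dec (a, b) (sup D) then true else false.

Lemma lit_eqb_true a b : lit_eqb a b = true <-> a = b.
Proof. unfold lit_eqb; destruct (lit_eq_dec a b); split; congruence. Qed.
Lemma supb_true D a b : supb D a b = true <-> In (a, b) (sup D).
Proof. unfold supb; destruct (in_dec _ _ _); split; congruence. Qed.
Lemma is_sdb_true r : is_sdb r = true <-> is_sd r.
Proof. unfold is_sdb, is_sd; destruct (rkd r); split; intuition congruence. Qed.

Definition attackers (D : theory) (x : rule) : list rule :=
  filter (fun s => lit_eqb (rhead s) (compl (rhead x))) (rules D).

Inductive gadget_kind : Type :=
  CounterDefault | CounterRefute | UnbeatenDefault | UnbeatenRefute | Team | CounterBy | BeatenBy.

Definition all_gadget_kinds : list gadget_kind :=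
  [CounterDefault; CounterRefute; UnbeatenDefault; UnbeatenRefute; Team; CounterBy; BeatenBy].

Definition kind_code (k : gadget_kind) : nat :=
  match k with
  | CounterDefault => 1 | CounterRefute => 2 | UnbeatenDefault => 3 | UnbeatenRefute => 4
  | Team => 5 | CounterBy => 6 | BeatenBy => 7
  end.

(* Gadgets for a rule [x] of [D], [y] ranging over the attackers of [x] that
   are superior to it.  In the star logics [counter_atom D x] is provable iff
   [x] is inapplicable or overridden by an applicable strict or defeasible [y],
   and [unbeaten_atom D x] iff no [y] is applicable.  The [Team] rule of [x]
   moreover needs [x] unbeaten and every attacker of [x] countered; as it is
   superior to all rules of [D], it wins alone where [+partial] needs a team. *)
Definition gadget_rule (D : theory) (k : gadget_kind) (y x : rule) : rule :=
  let l := glabel (label_bound D) (kind_code k) in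
  match k with
  | CounterDefault => mkRule (l (rlabel x) 0) [] (Pos (counter_atom D x)) Defeasible
  | CounterRefute => mkRule (l (rlabel x) 0) (rbody x) (Neg (counter_atom D x)) Defeasible
  | UnbeatenDefault => mkRule (l (rlabel x) 0) [] (Pos (unbeaten_atom D x)) Defeasible
  | UnbeatenRefute => mkRule (l (rlabel x) 0) [] (Neg (unbeaten_atom D x)) Defeasible
  | Team => mkRule (l (rlabel x) 0)
      (rbody x ++ Pos (unbeaten_atom D x) :: map (fun s => Pos (counter_atom D s)) (attackers D x))
      (rhead x) Defeasible
  | CounterBy => mkRule (l (rlabel y) (rlabel x)) (rbody y) (Pos (counter_atom D x)) Defeasible
  | BeatenBy => mkRule (l (rlabel y) (rlabel x)) (rbody y) (Neg (unbeaten_atom D x)) Defeasible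
  end.

Definition gadget_cond (D : theory) (k : gadget_kind) (y x : rule) : bool :=
  let superior_attacker := lit_eqb (rhead y) (compl (rhead x)) && supb D (rlabel y) (rlabel x) in
  match k with
  | Team => is_sdb x
  | CounterBy => is_sdb y && superior_attacker
  | BeatenBy => superior_attacker
  | _ => true
  end.

Definition gadgets (D : theory) : list rule :=
  flat_map (fun x => flat_map (fun y => flat_map (fun k =>
     if gadget_cond D k y x then [gadget_rule D k y x] else [])
     all_gadget_kinds) (rules D)) (rules D).

Definition gadget_sup (D : theory) : list (label * label) :=
  let g k i j := glabel (label_bound D) (kind_code k) i j in
  flat_map (fun x => let l := rlabel x in
     (g UnbeatenDefault l 0, g UnbeatenRefute l 0)
     :: map (fun s => (g Team l 0, rlabel s)) (rules D)
     ++ map (fun y => (g CounterBy (rlabel y) l, g CounterRefute l 0)) (rules D)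
     ++ map (fun y => (g BeatenBy (rlabel y) l, g UnbeatenDefault l 0)) (rules D)) (rules D).

Definition star_theory (D : theory) : theory :=
  mkTheory (facts D) (rules D ++ nodup rule_eq_dec (gadgets D)) (sup D ++ gadget_sup D).

Lemma in_gadgets D R : In R (gadgets D) <->
  exists x y k, In x (rules D) /\ In y (rules D) /\ gadget_cond D k y x = true /\
    R = gadget_rule D k y x.
Proof.
  unfold gadgets; split.
  - intros h; apply in_flat_map in h as [x [hx h]].
    apply in_flat_map in h as [y [hy h]].
    apply in_flat_map in h as [k [hk h]].
    destruct (gadget_cond D k y x) eqn:e; [|destruct h].
    destruct h as [<-|[]]; exists x, y, k; auto.
  - intros [x [y [k [hx [hy [hc ->]]]]]].
    apply in_flat_map; exists x; split; auto.
    apply in_flat_map; exists y; split; auto.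
    apply in_flat_map; exists k; split; [destruct k; simpl; tauto|].
    rewrite hc; simpl; auto.
Qed.

Lemma divmod_inj M a b c d : b < M -> d < M -> a * M + b = c * M + d -> a = c /\ b = d.
Proof.
  intros hb hd h.
  assert (e : forall a b, b < M -> (a * M + b) / M = a).
  { intros a' b' hb'. rewrite Nat.div_add_l, Nat.div_small by lia. lia. }
  assert (a = c) by (rewrite <- (e a b), <- (e c d), h; auto). subst; lia.
Qed.

Lemma glabel_inj M k i j k' i' j' : i < M -> j < M -> i' < M -> j' < M ->
  glabel M k i j = glabel M k' i' j' -> k = k' /\ i = i' /\ j = j'.
Proof.
  unfold glabel; intros h1 h2 h3 h4 e.
  apply divmod_inj in e as [e e']; auto.
  apply divmod_inj in e; auto. lia.
Qed.

Lemma glabel_ge M k i j : 1 <= k -> 1 <= M -> M <= glabel M k i j.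
Proof. unfold glabel; intros; nia. Qed.

Lemma glabel_div M k i j : i < M -> j < M -> glabel M k i j / (M * M) = k.
Proof.
  intros hi hj. unfold glabel.
  replace ((k * M + i) * M + j) with (k * (M * M) + (i * M + j)) by ring.
  rewrite Nat.div_add_l, Nat.div_small by nia. lia.
Qed.

Lemma le_list_max x l : In x l -> x <= list_max l.
Proof. intros h; exact (proj1 (Forall_forall _ _) (proj1 (list_max_le l _) (le_n _)) x h). Qed.

Lemma nodup_map_inj {X Y} (f : X -> Y) l x y :
  NoDup (map f l) -> In x l -> In y l -> f x = f y -> x = y.
Proof.
  induction l as [|a l IH]; simpl; [tauto|].
  intros hn hx hy e. inversion hn as [|? ? hnin hn']; subst.
  destruct hx as [<-|hx], hy as [<-|hy]; auto.
  - exfalso; apply hnin; rewrite e; apply in_map; auto.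
  - exfalso; apply hnin; rewrite <- e; apply in_map; auto.
Qed.

Section Bounds.
Variable D : theory.

Lemma label_bound_pos : 1 <= label_bound D.
Proof. unfold label_bound; lia. Qed.

Lemma rule_label_lt x : In x (rules D) -> rlabel x < label_bound D.
Proof.
  intros h; apply Nat.lt_succ_r, le_list_max.
  apply in_or_app; left; apply in_map; auto.
Qed.

Lemma sup_label_lt a b : In (a, b) (sup D) -> a < label_bound D /\ b < label_bound D.
Proof.
  intros h; split; apply Nat.lt_succ_r, le_list_max;
  apply in_or_app; right; apply in_flat_map; exists (a, b); simpl; auto.
Qed.

Lemma Sigma_atom_lt a : In a (Sigma D) -> atom_of a < atom_bound D.
Proof. intros h; apply Nat.lt_succ_r, le_list_max, in_map; auto. Qed.

Lemma head_in_Sigma x : In x (rules D) -> In (rhead x) (Sigma D).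
Proof. intros h; apply in_or_app; right; apply in_flat_map; exists x; simpl; auto. Qed.
Lemma body_in_Sigma x a : In x (rules D) -> In a (rbody x) -> In a (Sigma D).
Proof. intros h ha; apply in_or_app; right; apply in_flat_map; exists x; simpl; auto. Qed.
Lemma fact_in_Sigma a : In a (facts D) -> In a (Sigma D).
Proof. intros h; apply in_or_app; left; auto. Qed.
End Bounds.

Section StarWellFormed.
Variable D : theory.
Hypothesis wfD : wf_theory D.
Let M := label_bound D.

Lemma rule_label_inj x y : In x (rules D) -> In y (rules D) -> rlabel x = rlabel y -> x = y.
Proof. intros; eapply nodup_map_inj; eauto. apply (proj1 wfD). Qed.

Lemma gadget_rule_label k y x : In x (rules D) -> In y (rules D) ->
  exists i j, i < M /\ j < M /\ rlabel (gadget_rule D k y x) = glabel M (kind_code k) i j.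
Proof.
  intros hx hy. pose proof (rule_label_lt D x hx). pose proof (rule_label_lt D y hy).
  pose proof (label_bound_pos D).
  destruct k; simpl; (eexists _, _; split; [|split; [|reflexivity]]); unfold M; eauto; lia.
Qed.

Lemma gadget_label_ge R : In R (gadgets D) -> M <= rlabel R.
Proof.
  intros h; apply in_gadgets in h as [x [y [k [hx [hy [_ ->]]]]]].
  destruct (gadget_rule_label k y x hx hy) as [i [j [_ [_ ->]]]].
  apply glabel_ge; [destruct k; simpl; lia|apply label_bound_pos].
Qed.

Lemma gadget_label_inj R R' :
  In R (gadgets D) -> In R' (gadgets D) -> rlabel R = rlabel R' -> R = R'.
Proof.
  intros h h'; apply in_gadgets in h as [x [y [k [hx [hy [_ ->]]]]]].
  apply in_gadgets in h' as [x' [y' [k' [hx' [hy' [_ ->]]]]]].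
  pose proof (rule_label_lt D x hx). pose proof (rule_label_lt D y hy).
  pose proof (rule_label_lt D x' hx'). pose proof (rule_label_lt D y' hy').
  pose proof (label_bound_pos D).
  intros e.
  destruct k, k'; simpl in e; apply glabel_inj in e; unfold M in *; try lia;
  destruct e as [_ [e1 e2]];
  repeat match goal with
  | e : rlabel ?a = rlabel ?b |- _ =>
      let h := fresh in assert (h : a = b) by (apply rule_label_inj; auto); subst b; clear e
  end; reflexivity.
Qed.

Lemma star_theory_labels_nodup : NoDup (map rlabel (rules (star_theory D))).
Proof.
  simpl; rewrite map_app; apply NoDup_app.
  - apply (proj1 wfD).
  - apply NoDup_map_NoDup_ForallPairs; [|apply NoDup_nodup].
    intros a b ha hb; rewrite nodup_In in ha, hb; apply gadget_label_inj; auto.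
  - intros l hl hl'. apply in_map_iff in hl as [x [<- hx]].
    apply in_map_iff in hl' as [R [e hR]]. rewrite nodup_In in hR.
    pose proof (gadget_label_ge R hR). pose proof (rule_label_lt D x hx). unfold M in *; lia.
Qed.

(* Every gadget superiority pair strictly decreases the layer, while the
   pairs of [D] stay inside layer 0. *)
Definition layer_of_code (k : nat) : nat := match k with 2 | 4 => 1 | 3 => 2 | _ => 3 end.
Definition sup_layer (l : nat) : nat :=
  if l <? M then 0 else layer_of_code (l / (M * M)).

Lemma sup_layer_small l : l < M -> sup_layer l = 0.
Proof. intros h; unfold sup_layer; destruct (Nat.ltb_spec l M); lia. Qed.

Lemma sup_layer_glabel k i j : 1 <= k -> i < M -> j < M ->
  sup_layer (glabel M k i j) = layer_of_code k.
Proof.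
  intros hk hi hj; unfold sup_layer.
  pose proof (glabel_ge M k i j hk (label_bound_pos D)).
  destruct (Nat.ltb_spec (glabel M k i j) M); [unfold M in *; lia|].
  rewrite glabel_div by auto. reflexivity.
Qed.

Lemma gadget_sup_layer_lt a b : In (a, b) (gadget_sup D) -> sup_layer b < sup_layer a.
Proof.
  intros h; apply in_flat_map in h as [x [hx h]].
  pose proof (rule_label_lt D x hx). pose proof (label_bound_pos D).
  simpl in h; destruct h as [e|h].
  { inversion e; subst. rewrite !sup_layer_glabel by (unfold M in *; lia). simpl; lia. }
  apply in_app_or in h as [h|h]; [|apply in_app_or in h as [h|h]];
  apply in_map_iff in h as [s [e hs]]; inversion e; subst;
  pose proof (rule_label_lt D s hs);
  rewrite ?sup_layer_glabel by (unfold M in *; lia);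
  rewrite ?sup_layer_small by (unfold M in *; lia); simpl; lia.
Qed.

Lemma sup_clos_small a b :
  clos_trans label (fun a b => In (a, b) (sup D)) a b -> a < M /\ b < M.
Proof.
  induction 1 as [a b h|a b c h1 [] h2 []]; [|split; auto].
  apply sup_label_lt; auto.
Qed.

Lemma star_sup_clos a b :
  clos_trans label (fun a b => In (a, b) (sup (star_theory D))) a b ->
  sup_layer b < sup_layer a \/ clos_trans label (fun a b => In (a, b) (sup D)) a b.
Proof.
  induction 1 as [a b h|a b c h1 IH1 h2 IH2].
  - apply in_app_or in h as [h|h]; [right; apply t_step; auto|left].
    apply gadget_sup_layer_lt; auto.
  - destruct IH1 as [i1|i1], IH2 as [i2|i2].
    + left; lia.
    + apply sup_clos_small in i2 as [e1 e2]; left.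
      rewrite (sup_layer_small c e2), (sup_layer_small b e1) in *; lia.
    + apply sup_clos_small in i1 as [e1 e2]; rewrite (sup_layer_small b e2) in i2; lia.
    + right; eapply t_trans; eauto.
Qed.

Lemma star_theory_wf : wf_theory (star_theory D).
Proof.
  split; [apply star_theory_labels_nodup|].
  intros x h. apply star_sup_clos in h as [h|h]; [lia|exact (proj2 wfD x h)].
Qed.
End StarWellFormed.

(** * Correctness of the simulation *)

Lemma Pos_inj a b : Pos a = Pos b -> a = b. Proof. congruence. Qed.
Lemma Neg_inj a b : Neg a = Neg b -> a = b. Proof. congruence. Qed.
Lemma compl_involutive q : compl (compl q) = q.
Proof. destruct q; reflexivity. Qed.

Arguments counter_atom : simpl never.
Arguments unbeaten_atom : simpl never.

Section Simulation.
Variable D : theory.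
Hypothesis wfD : wf_theory D.
Variable RA : list rule.
Let A := mkTheory [] RA [].
Hypothesis modA : modular D (star_theory D) A.

Local Notation M := (label_bound D).
Let DA := add D A.
Let SA := add (star_theory D) A.
Let PD := proves DA.
Let PS := proves SA.

Definition gadget_atom (a : atom) : Prop :=
  exists x, In x (rules D) /\ (a = counter_atom D x \/ a = unbeaten_atom D x).
Definition nongadget (q : literal) : Prop := ~ gadget_atom (atom_of q).

Definition superior_attacker (y x : rule) : Prop :=
  In y (rules D) /\ rhead y = compl (rhead x) /\ In (rlabel y, rlabel x) (sup D).

Definition team_rule x := gadget_rule D Team x x.
Definition counter_default x := gadget_rule D CounterDefault x x.
Definition counter_refute x := gadget_rule D CounterRefute x x.
Definition counter_by y x := gadget_rule D CounterBy y x.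
Definition unbeaten_default x := gadget_rule D UnbeatenDefault x x.
Definition unbeaten_refute x := gadget_rule D UnbeatenRefute x x.
Definition beaten_by y x := gadget_rule D BeatenBy y x.

Lemma nongadget_compl q : nongadget q -> nongadget (compl q).
Proof. destruct q; auto. Qed.

Lemma counter_pos_gadget x : In x (rules D) -> ~ nongadget (Pos (counter_atom D x)).
Proof. intros hx hb; apply hb; exists x; auto. Qed.
Lemma counter_neg_gadget x : In x (rules D) -> ~ nongadget (Neg (counter_atom D x)).
Proof. intros hx hb; apply hb; exists x; auto. Qed.
Lemma unbeaten_pos_gadget x : In x (rules D) -> ~ nongadget (Pos (unbeaten_atom D x)).
Proof. intros hx hb; apply hb; exists x; auto. Qed.
Lemma unbeaten_neg_gadget x : In x (rules D) -> ~ nongadget (Neg (unbeaten_atom D x)).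
Proof. intros hx hb; apply hb; exists x; auto. Qed.

Lemma counter_atom_inj x x' : In x (rules D) -> In x' (rules D) ->
  counter_atom D x = counter_atom D x' -> x = x'.
Proof. unfold counter_atom; intros h h' e; apply (rule_label_inj D wfD); auto; lia. Qed.
Lemma unbeaten_atom_inj x x' : In x (rules D) -> In x' (rules D) ->
  unbeaten_atom D x = unbeaten_atom D x' -> x = x'.
Proof. unfold unbeaten_atom; intros h h' e; apply (rule_label_inj D wfD); auto; lia. Qed.
Lemma counter_neq_unbeaten x x' : counter_atom D x <> unbeaten_atom D x'.
Proof. unfold counter_atom, unbeaten_atom; lia. Qed.

Lemma Sigma_nongadget a : In a (Sigma D) -> nongadget a.
Proof.
  intros h [x [hx e]]. apply Sigma_atom_lt in h. unfold counter_atom, unbeaten_atom in e. lia.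
Qed.

Lemma gadgets_in_star R : In R (gadgets D) -> In R (rules (star_theory D)).
Proof. intros h; apply in_or_app; right; apply nodup_In; auto. Qed.

Lemma gadget_rule_in_gadgets k y x : In x (rules D) -> In y (rules D) ->
  gadget_cond D k y x = true -> In (gadget_rule D k y x) (gadgets D).
Proof. intros; apply in_gadgets; exists x, y, k; auto. Qed.

(* Modularity keeps the gadget atoms, which occur in the star theory but not
   in [D], out of [A]. *)
Lemma SigmaA_nongadget a : In a (Sigma A) -> nongadget a.
Proof.
  intros h [x [hx e]].
  assert (hS : In a (Sigma (star_theory D))).
  { destruct a as [p|p]; simpl in e; destruct e as [e|e]; subst p;
      [ apply (head_in_Sigma _ (counter_default x))
      | apply (head_in_Sigma _ (unbeaten_default x))
      | apply (head_in_Sigma _ (counter_refute x))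
      | apply (head_in_Sigma _ (unbeaten_refute x)) ];
      apply gadgets_in_star, gadget_rule_in_gadgets; auto. }
  apply (Sigma_nongadget a (proj1 modA a h hS)); exists x; auto.
Qed.

Lemma in_rules_DA R : In R (rules DA) <-> In R (rules D) \/ In R RA.
Proof. simpl; rewrite in_app_iff; tauto. Qed.
Lemma in_rules_SA R : In R (rules SA) <-> In R (rules D) \/ In R (gadgets D) \/ In R RA.
Proof. simpl; rewrite !in_app_iff, nodup_In; tauto. Qed.
Lemma rules_D_DA R : In R (rules D) -> In R (rules DA).
Proof. intros; apply in_rules_DA; auto. Qed.

Lemma rule_head_nongadget R : In R (rules D) \/ In R RA -> nongadget (rhead R).
Proof.
  intros [h|h]; [apply Sigma_nongadget, head_in_Sigma|apply SigmaA_nongadget, (head_in_Sigma A)];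
    auto.
Qed.

Lemma DA_body_nongadget R a : In R (rules DA) -> In a (rbody R) -> nongadget a.
Proof.
  rewrite in_rules_DA; intros [h|h] ha;
    [apply Sigma_nongadget, (body_in_Sigma D R)|apply SigmaA_nongadget, (body_in_Sigma A R)];
    auto.
Qed.

Lemma labelA_notin_D R : In R RA -> ~ In (rlabel R) (Lambda D).
Proof.
  intros h h'; apply (proj1 (proj2 modA) _ h'); simpl.
  unfold Lambda; simpl; rewrite app_nil_r; apply in_map; auto.
Qed.
Lemma labelA_notin_star R : In R RA -> ~ In (rlabel R) (Lambda (star_theory D)).
Proof.
  intros h h'; apply (proj2 (proj2 modA) _ h'); simpl.
  unfold Lambda; simpl; rewrite app_nil_r; apply in_map; auto.
Qed.

Lemma in_gadget_sup a b : In (a, b) (gadget_sup D) ->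
  let g k i j := glabel M (kind_code k) i j in
  exists x, In x (rules D) /\
  ((a = g UnbeatenDefault (rlabel x) 0 /\ b = g UnbeatenRefute (rlabel x) 0) \/
   (exists s, In s (rules D) /\ a = g Team (rlabel x) 0 /\ b = rlabel s) \/
   (exists y, In y (rules D) /\ a = g CounterBy (rlabel y) (rlabel x) /\
      b = g CounterRefute (rlabel x) 0) \/
   (exists y, In y (rules D) /\ a = g BeatenBy (rlabel y) (rlabel x) /\
      b = g UnbeatenDefault (rlabel x) 0)).
Proof.
  intros h g; apply in_flat_map in h as [x [hx h]]; exists x; split; auto.
  simpl in h; destruct h as [e|h]; [inversion e; subst; left; auto|right].
  apply in_app_or in h as [h|h]; [|apply in_app_or in h as [h|h]];
  apply in_map_iff in h as [s [e hs]]; inversion e; subst; eauto 10.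
Qed.

Lemma sup_SA_in_Lambda a b : In (a, b) (sup SA) ->
  In a (Lambda (star_theory D)) /\ In b (Lambda (star_theory D)).
Proof.
  intros h; simpl in h; rewrite app_nil_r in h.
  split; apply in_or_app; right; apply in_flat_map; exists (a, b); split; simpl; auto.
Qed.

Lemma glabel_neq k i j k' i' j' : k <> k' -> i < M -> j < M -> i' < M -> j' < M ->
  glabel M k i j <> glabel M k' i' j'.
Proof. intros hk h1 h2 h3 h4 e; apply glabel_inj in e; auto; lia. Qed.

Lemma glabel_neq_small k i j l : 1 <= k -> l < M -> glabel M k i j <> l.
Proof. intros hk hl e; pose proof (glabel_ge M k i j hk (label_bound_pos D)); lia. Qed.

Ltac label_bound_tac :=
  first [ assumption | apply rule_label_lt; assumption | pose proof (label_bound_pos D); lia ].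

Ltac glabel_contra :=
  match goal with
  | e : glabel M ?k ?i ?j = glabel M ?k' ?i' ?j' |- _ =>
      exfalso; apply (glabel_neq k i j k' i' j'); [lia|label_bound_tac..|exact e]
  | e : glabel M ?k ?i ?j = ?l |- _ =>
      exfalso; apply (glabel_neq_small k i j l); [lia|label_bound_tac|exact e]
  | e : ?l = glabel M ?k ?i ?j |- _ =>
      exfalso; apply (glabel_neq_small k i j l); [lia|label_bound_tac|symmetry; exact e]
  | e : glabel M ?k ?i ?j < M |- _ =>
      exfalso; pose proof (glabel_ge M k i j ltac:(lia) (label_bound_pos D)); lia
  end.

Ltac not_sgt_SA :=
  unfold sgt; simpl; rewrite ?app_nil_r;
  let h := fresh in intro h; apply in_app_or in h as [h|h];
  [ apply sup_label_lt in h as [? ?]; glabel_contra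
  | apply in_gadget_sup in h as [? [? h]]; cbn [kind_code] in h;
    destruct h as [[? ?]|[[? [? [? ?]]]|[[? [? [? ?]]]|[? [? [? ?]]]]]]; try glabel_contra ].

Lemma sgt_SA_DA R S : In R (rules DA) -> In S (rules DA) -> sgt SA R S -> sgt DA R S.
Proof.
  unfold sgt; simpl; rewrite !app_nil_r; intros hR hS h.
  apply in_app_or in h as [h|h]; auto. exfalso.
  apply in_rules_DA in hR as [hR|hR].
  - pose proof (rule_label_lt D R hR).
    apply in_gadget_sup in h as [x [hx h]]; cbn [kind_code] in h.
    destruct h as [[e1 e2]|[[s [hs [e1 e2]]]|[[t [ht [e1 e2]]]|[s [hs [e1 e2]]]]]];
      glabel_contra.
  - apply (labelA_notin_star R hR), (sup_SA_in_Lambda _ (rlabel S)).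
    simpl; rewrite app_nil_r; apply in_or_app; auto.
Qed.

Lemma sgt_DA_SA R S : sgt DA R S -> sgt SA R S.
Proof. unfold sgt; simpl; rewrite !app_nil_r; intros; apply in_or_app; auto. Qed.

Lemma sgt_DA_inv R S : In R (rules DA) -> In S (rules DA) -> sgt DA R S ->
  In R (rules D) /\ In S (rules D) /\ In (rlabel R, rlabel S) (sup D).
Proof.
  unfold sgt; simpl; rewrite !app_nil_r; intros hR hS h.
  assert (hl : In (rlabel R) (Lambda D) /\ In (rlabel S) (Lambda D)).
  { split; apply in_or_app; right; apply in_flat_map; exists (rlabel R, rlabel S); simpl; auto. }
  apply in_rules_DA in hR as [hR|hR]; [|exfalso; apply (labelA_notin_D R hR); tauto].
  apply in_rules_DA in hS as [hS|hS]; [|exfalso; apply (labelA_notin_D S hS); tauto].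
  auto.
Qed.

Lemma sgt_of_sup R S : In (rlabel R, rlabel S) (sup D) -> sgt DA R S.
Proof. unfold sgt; simpl; rewrite app_nil_r; auto. Qed.

Lemma not_sgt_SA_A R S : In S RA -> ~ sgt SA R S.
Proof. intros h h'; apply (labelA_notin_star S h), (sup_SA_in_Lambda (rlabel R)); auto. Qed.
Lemma not_sgt_DA_A R S : In S RA -> ~ sgt DA R S.
Proof. intros h h'; apply (not_sgt_SA_A R S h), sgt_DA_SA; auto. Qed.

Lemma gadget_sup_sgt a b : In (a, b) (gadget_sup D) ->
  forall R S, rlabel R = a -> rlabel S = b -> sgt SA R S.
Proof. intros h R S <- <-; unfold sgt; simpl; rewrite app_nil_r; apply in_or_app; auto. Qed.

Lemma team_rule_sgt x S : In x (rules D) -> In S (rules D) -> sgt SA (team_rule x) S.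
Proof.
  intros hx hS; apply (gadget_sup_sgt (rlabel (team_rule x)) (rlabel S)); auto.
  apply in_flat_map; exists x; split; auto.
  right; apply in_or_app; left; apply in_map_iff; exists S; auto.
Qed.
Lemma unbeaten_default_sgt x : In x (rules D) -> sgt SA (unbeaten_default x) (unbeaten_refute x).
Proof.
  intros hx; apply (gadget_sup_sgt (rlabel (unbeaten_default x)) (rlabel (unbeaten_refute x)));
    auto.
  apply in_flat_map; exists x; simpl; auto.
Qed.
Lemma beaten_by_sgt y x : In x (rules D) -> In y (rules D) ->
  sgt SA (beaten_by y x) (unbeaten_default x).
Proof.
  intros hx hy; apply (gadget_sup_sgt (rlabel (beaten_by y x)) (rlabel (unbeaten_default x)));
    auto.
  apply in_flat_map; exists x; split; auto. right.
  apply in_or_app; right; apply in_or_app; right; apply in_map_iff; exists y; auto.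
Qed.
Lemma counter_by_sgt y x : In x (rules D) -> In y (rules D) ->
  sgt SA (counter_by y x) (counter_refute x).
Proof.
  intros hx hy; apply (gadget_sup_sgt (rlabel (counter_by y x)) (rlabel (counter_refute x)));
    auto.
  apply in_flat_map; exists x; split; auto. right.
  apply in_or_app; right; apply in_or_app; left; apply in_map_iff; exists y; auto.
Qed.

Lemma not_sgt_team_rule R x : In x (rules D) -> ~ sgt SA R (team_rule x).
Proof. intros hx; not_sgt_SA. Qed.
Lemma not_sgt_unbeaten_refute x : In x (rules D) ->
  ~ sgt SA (unbeaten_refute x) (unbeaten_default x).
Proof. intros hx; not_sgt_SA. Qed.
Lemma not_sgt_unbeaten_default y x : In x (rules D) -> In y (rules D) ->
  ~ sgt SA (unbeaten_default x) (beaten_by y x).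
Proof. intros hx hy; not_sgt_SA. Qed.
Lemma not_sgt_counter_default x : In x (rules D) ->
  ~ sgt SA (counter_default x) (counter_refute x).
Proof. intros hx; not_sgt_SA. Qed.
Lemma not_sgt_counter_refute x : In x (rules D) ->
  ~ sgt SA (counter_refute x) (counter_default x).
Proof. intros hx; not_sgt_SA. Qed.

Lemma inR_SA_of_DA q R : inR DA q R -> inR SA q R.
Proof.
  intros [h e]; split; auto. apply in_rules_SA. apply in_rules_DA in h; tauto.
Qed.

Lemma inR_DA_of_D q R : In R (rules D) -> rhead R = q -> inR DA q R.
Proof. intros; split; auto; apply rules_D_DA; auto. Qed.

Lemma inR_SA_gadget R : In R (gadgets D) -> inR SA (rhead R) R.
Proof. intros h; split; auto; apply in_rules_SA; auto. Qed.

Lemma gadget_sd R : In R (gadgets D) -> is_sd R.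
Proof. intros h; apply in_gadgets in h as [x [y [k [_ [_ [_ ->]]]]]]; destruct k; right; auto. Qed.

Lemma inRsd_SA_gadget R : In R (gadgets D) -> inRsd SA (rhead R) R.
Proof. intros h; split; [apply inR_SA_gadget|apply gadget_sd]; auto. Qed.

Ltac gadget_inRsd :=
  match goal with |- inRsd SA _ ?R =>
    apply (inRsd_SA_gadget R), gadget_rule_in_gadgets; auto; simpl;
    rewrite ?andb_true_iff, ?lit_eqb_true, ?supb_true, ?is_sdb_true; auto
  end.

Lemma inRsd_team_rule x : In x (rules D) -> is_sd x -> inRsd SA (rhead x) (team_rule x).
Proof. intros; gadget_inRsd. Qed.
Lemma inRsd_counter_default x : In x (rules D) ->
  inRsd SA (Pos (counter_atom D x)) (counter_default x).
Proof. intros; gadget_inRsd. Qed.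
Lemma inRsd_counter_refute x : In x (rules D) ->
  inRsd SA (Neg (counter_atom D x)) (counter_refute x).
Proof. intros; gadget_inRsd. Qed.
Lemma inRsd_counter_by y x : In x (rules D) -> superior_attacker y x -> is_sd y ->
  inRsd SA (Pos (counter_atom D x)) (counter_by y x).
Proof. intros hx [hy [h1 h2]] hsd; gadget_inRsd. Qed.
Lemma inRsd_unbeaten_default x : In x (rules D) ->
  inRsd SA (Pos (unbeaten_atom D x)) (unbeaten_default x).
Proof. intros; gadget_inRsd. Qed.
Lemma inRsd_beaten_by y x : In x (rules D) -> superior_attacker y x ->
  inRsd SA (Neg (unbeaten_atom D x)) (beaten_by y x).
Proof. intros hx [hy [h1 h2]]; gadget_inRsd. Qed.

Lemma inR_SA_nongadget q R : nongadget q -> inR SA q R ->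
  inR DA q R \/ exists x, In x (rules D) /\ is_sd x /\ rhead x = q /\ R = team_rule x.
Proof.
  intros hb [h e]. apply in_rules_SA in h as [h|[h|h]].
  - left; split; auto; apply in_rules_DA; auto.
  - apply in_gadgets in h as [x [y [k [hx [hy [hc ->]]]]]].
    destruct k; simpl in e; subst q; try (exfalso; apply hb; exists x; auto; fail).
    right; exists x; repeat split; auto; apply is_sdb_true; exact hc.
  - left; split; auto; apply in_rules_DA; auto.
Qed.

Lemma inR_SA_gadget_lit q R : ~ nongadget q -> inR SA q R -> In R (gadgets D).
Proof.
  intros hb [h e]. apply in_rules_SA in h as [h|[h|h]]; auto;
    exfalso; apply hb; subst q; apply rule_head_nongadget; auto.
Qed.

Ltac gadget_head_inv hx0 h :=
  let x := fresh "x" in let y := fresh "y" in let k := fresh "k" in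
  let hx := fresh "hx" in let hy := fresh "hy" in let hc := fresh "hc" in
  apply in_gadgets in h as [x [y [k [hx [hy [hc ->]]]]]];
  destruct k; simpl in *;
  match goal with
  | e : rhead x = _ |- _ =>
      exfalso; apply (rule_head_nongadget x (or_introl hx)); rewrite e;
      eexists; split; [exact hx0|simpl; auto]
  | e : Pos _ = Neg _ |- _ => discriminate e
  | e : Neg _ = Pos _ |- _ => discriminate e
  | e : Pos (counter_atom D _) = Pos (unbeaten_atom D _) |- _ =>
      apply Pos_inj in e; exfalso; exact (counter_neq_unbeaten _ _ e)
  | e : Pos (unbeaten_atom D _) = Pos (counter_atom D _) |- _ =>
      apply Pos_inj in e; exfalso; exact (counter_neq_unbeaten _ _ (eq_sym e))
  | e : Neg (counter_atom D _) = Neg (unbeaten_atom D _) |- _ =>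
      apply Neg_inj in e; exfalso; exact (counter_neq_unbeaten _ _ e)
  | e : Neg (unbeaten_atom D _) = Neg (counter_atom D _) |- _ =>
      apply Neg_inj in e; exfalso; exact (counter_neq_unbeaten _ _ (eq_sym e))
  | e : Pos (counter_atom D _) = Pos (counter_atom D _) |- _ =>
      apply Pos_inj, counter_atom_inj in e; auto; subst
  | e : Neg (counter_atom D _) = Neg (counter_atom D _) |- _ =>
      apply Neg_inj, counter_atom_inj in e; auto; subst
  | e : Pos (unbeaten_atom D _) = Pos (unbeaten_atom D _) |- _ =>
      apply Pos_inj, unbeaten_atom_inj in e; auto; subst
  | e : Neg (unbeaten_atom D _) = Neg (unbeaten_atom D _) |- _ =>
      apply Neg_inj, unbeaten_atom_inj in e; auto; subst
  end.

Lemma inR_counter_pos x R : In x (rules D) -> inR SA (Pos (counter_atom D x)) R ->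
  R = counter_default x \/ exists y, superior_attacker y x /\ is_sd y /\ R = counter_by y x.
Proof.
  intros hx0 h. pose proof (inR_SA_gadget_lit _ _ (counter_pos_gadget x hx0) h) as hG.
  destruct h as [_ e]. gadget_head_inv hx0 hG.
  - left; reflexivity.
  - right; rewrite !andb_true_iff, lit_eqb_true, supb_true, is_sdb_true in hc.
    destruct hc as [h1 [h2 h3]]; exists y; repeat split; auto.
Qed.

Lemma inR_counter_neg x R : In x (rules D) -> inR SA (Neg (counter_atom D x)) R ->
  R = counter_refute x.
Proof.
  intros hx0 h. pose proof (inR_SA_gadget_lit _ _ (counter_neg_gadget x hx0) h) as hG.
  destruct h as [_ e]. gadget_head_inv hx0 hG. reflexivity.
Qed.

Lemma inR_unbeaten_pos x R : In x (rules D) -> inR SA (Pos (unbeaten_atom D x)) R ->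
  R = unbeaten_default x.
Proof.
  intros hx0 h. pose proof (inR_SA_gadget_lit _ _ (unbeaten_pos_gadget x hx0) h) as hG.
  destruct h as [_ e]. gadget_head_inv hx0 hG. reflexivity.
Qed.

Lemma inR_unbeaten_neg x R : In x (rules D) -> inR SA (Neg (unbeaten_atom D x)) R ->
  R = unbeaten_refute x \/ exists y, superior_attacker y x /\ R = beaten_by y x.
Proof.
  intros hx0 h. pose proof (inR_SA_gadget_lit _ _ (unbeaten_neg_gadget x hx0) h) as hG.
  destruct h as [_ e]. gadget_head_inv hx0 hG.
  - left; reflexivity.
  - right; rewrite !andb_true_iff, lit_eqb_true, supb_true in hc.
    destruct hc as [h2 h3]; exists y; repeat split; auto.
Qed.

Lemma team_rule_body x a : In a (rbody (team_rule x)) <->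
  In a (rbody x) \/ a = Pos (unbeaten_atom D x) \/
  exists s, In s (rules D) /\ rhead s = compl (rhead x) /\ a = Pos (counter_atom D s).
Proof.
  simpl. rewrite in_app_iff; simpl. rewrite in_map_iff.
  split.
  - intros [h|[h|[s [e h]]]]; auto. right; right; apply filter_In in h as [h1 h2].
    apply lit_eqb_true in h2; eauto.
  - intros [h|[h|[s [h1 [h2 h3]]]]]; auto. right; right; exists s; split; auto.
    apply filter_In; split; auto; apply lit_eqb_true; auto.
Qed.

Lemma someM_team_rule P t x : someM P t x -> someM P t (team_rule x).
Proof. intros [a [h1 h2]]; exists a; split; auto; apply team_rule_body; auto. Qed.
Lemma allP_of_team_rule P s t x : allP P s t (team_rule x) -> allP P s t x.
Proof. intros h a ha; apply h, team_rule_body; auto. Qed.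
Lemma unbeaten_in_team_rule x : In (Pos (unbeaten_atom D x)) (rbody (team_rule x)).
Proof. apply team_rule_body; auto. Qed.
Lemma counter_in_team_rule x s : In s (rules D) -> rhead s = compl (rhead x) ->
  In (Pos (counter_atom D s)) (rbody (team_rule x)).
Proof. intros; apply team_rule_body; right; right; eauto. Qed.

Lemma gadget_not_strict R : In R (gadgets D) -> rkd R <> Strict.
Proof. intros h; apply in_gadgets in h as [x [y [k [_ [_ [_ ->]]]]]]; destruct k; discriminate. Qed.

Lemma facts_SA q : In q (facts SA) -> In q (facts D).
Proof. simpl; rewrite app_nil_r; auto. Qed.

Lemma inRs_SA_iff q r : nongadget q -> (inRs SA q r <-> inRs DA q r).
Proof.
  intros hb; split.
  - intros [h hs]; destruct (inR_SA_nongadget q r hb h) as [h'|[x [hx [_ [_ ->]]]]];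
      [split; auto|discriminate hs].
  - intros [h hs]; split; auto; apply inR_SA_of_DA; auto.
Qed.

Lemma gadget_no_plus_Delta n q : ~ nongadget q -> ~ iterT SA n (Plus, tDelta, q).
Proof.
  intros hb; destruct n; simpl; [tauto|].
  intros [h|[r [[h hs] _]]].
  - apply hb, Sigma_nongadget, fact_in_Sigma, facts_SA; auto.
  - apply (gadget_not_strict r); auto. eapply inR_SA_gadget_lit; eauto.
Qed.

Lemma gadget_minus_Delta n q : ~ nongadget q -> iterT SA (S n) (Minus, tDelta, q).
Proof.
  intros hb; simpl; split.
  - intros h; apply hb, Sigma_nongadget, fact_in_Sigma, facts_SA; auto.
  - intros r [h hs]; exfalso; apply (gadget_not_strict r); auto.
    eapply inR_SA_gadget_lit; eauto.
Qed.

Lemma gadget_proves_minus_Delta q : ~ nongadget q -> PS (Minus, tDelta, q).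
Proof. intros hb; exists 1; apply gadget_minus_Delta; auto. Qed.

(* Definite provability only uses strict rules and facts, which are the same
   in both theories. *)
Lemma iterT_Delta_iff n : forall q s, nongadget q ->
  (iterT DA n (s, tDelta, q) <-> iterT SA n (s, tDelta, q)).
Proof.
  induction n as [|n IH]; intros q s hb; [simpl; tauto|].
  assert (hbody : forall r a, inRs DA q r -> In a (rbody r) ->
            forall s', iterT DA n (s', tDelta, a) <-> iterT SA n (s', tDelta, a)).
  { intros r a hr ha s'; apply IH. exact (DA_body_nongadget r a (proj1 (proj1 hr)) ha). }
  destruct s; simpl; rewrite !app_nil_r.
  - split; intros [h|[r [hr hrb]]]; auto; right; exists r.
    + split; [apply inRs_SA_iff; auto|].
      intros a ha; apply (hbody r a hr ha Plus); auto.
    + apply inRs_SA_iff in hr; auto. split; auto.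
      intros a ha; apply (hbody r a hr ha Plus); auto.
  - split; intros [hF hrs]; split; auto; intros r hr.
    + apply inRs_SA_iff in hr; auto. destruct (hrs r hr) as [a [ha1 ha2]].
      exists a; split; auto; apply (hbody r a hr ha1 Minus); auto.
    + assert (hr' : inRs SA q r) by (apply inRs_SA_iff; auto).
      destruct (hrs r hr') as [a [ha1 ha2]].
      exists a; split; auto; apply (hbody r a hr ha1 Minus); auto.
Qed.

Lemma proves_Delta_iff q s : nongadget q -> (PD (s, tDelta, q) <-> PS (s, tDelta, q)).
Proof. intros hb; split; intros [n h]; exists n; apply (iterT_Delta_iff n q s hb); auto. Qed.

(* What [+counter_atom], [-counter_atom], [+unbeaten_atom] and [-unbeaten_atom]
   mean for a set of conclusions [P], with support tag [t] and attack tag [t']. *)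
Section GadgetConditions.
Variable P : concl -> Prop.

Definition countered (t t' : tag) (x : rule) : Prop :=
  someM P t' x \/ exists y, superior_attacker y x /\ is_sd y /\ allP P Plus t y.
Definition uncountered (t t' : tag) (x : rule) : Prop :=
  allP P Plus t' x /\ forall y, superior_attacker y x -> is_sd y -> someM P t y.
Definition unbeaten (t' : tag) (x : rule) : Prop :=
  forall y, superior_attacker y x -> someM P t' y.
Definition beaten (t' : tag) (x : rule) : Prop :=
  exists y, superior_attacker y x /\ allP P Plus t' y.
End GadgetConditions.

Section StarGadgets.
Variables T T' : tag.
Hypothesis star_T : star_tags T T'.

Lemma proves_counter_pos x : In x (rules D) -> countered PS T T' x ->
  PS (Plus, T, Pos (counter_atom D x)).
Proof.
  intros hx hc; apply proves_closed, star_T; right.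
  destruct hc as [h|[y [hy [hysd hyb]]]].
  - exists (counter_default x); split; [apply inRsd_counter_default; auto|].
    split; [intros a []|]. split; [apply gadget_proves_minus_Delta, counter_neg_gadget; auto|].
    intros S hS; apply inR_counter_neg in hS as ->; auto.
  - exists (counter_by y x); split; [apply inRsd_counter_by; auto|].
    split; [exact hyb|]. split; [apply gadget_proves_minus_Delta, counter_neg_gadget; auto|].
    intros S hS; apply inR_counter_neg in hS as ->; auto.
    right; apply counter_by_sgt; auto; apply hy.
Qed.

Lemma proves_counter_neg x : In x (rules D) -> uncountered PS T T' x ->
  PS (Minus, T, Pos (counter_atom D x)).
Proof.
  intros hx [hxb hys]; apply proves_closed, star_T.
  split; [apply gadget_proves_minus_Delta, counter_pos_gadget; auto|].
  intros r [hr _]. apply inR_counter_pos in hr as [->|[y [hy [hysd ->]]]]; auto.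
  2: left; exact (hys y hy hysd).
  right; right; exists (counter_refute x); split; [apply inRsd_counter_refute; auto|].
  split; [exact hxb|apply not_sgt_counter_default; auto].
Qed.

Lemma proves_unbeaten_pos x : In x (rules D) -> unbeaten PS T' x ->
  PS (Plus, T, Pos (unbeaten_atom D x)).
Proof.
  intros hx hu; apply proves_closed, star_T; right.
  exists (unbeaten_default x); split; [apply inRsd_unbeaten_default; auto|].
  split; [intros a []|]. split; [apply gadget_proves_minus_Delta, unbeaten_neg_gadget; auto|].
  intros S hS; apply inR_unbeaten_neg in hS as [->|[y [hy ->]]]; auto.
  - right; apply unbeaten_default_sgt; auto.
  - left; exact (hu y hy).
Qed.

Lemma proves_unbeaten_neg x : In x (rules D) -> beaten PS T' x ->
  PS (Minus, T, Pos (unbeaten_atom D x)).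
Proof.
  intros hx [y [hy hyb]]; apply proves_closed, star_T.
  split; [apply gadget_proves_minus_Delta, unbeaten_pos_gadget; auto|].
  intros r [hr _]; apply inR_unbeaten_pos in hr as ->; auto.
  right; right; exists (beaten_by y x); split; [apply inRsd_beaten_by; auto|].
  split; [exact hyb|apply not_sgt_unbeaten_default; auto; apply hy].
Qed.
End StarGadgets.

(* For [sigma^*] the attack of [counter_refute x] never defeats the default. *)
Lemma proves_counter_pos_sigmaS x : In x (rules D) -> PS (Plus, tsigmaS, Pos (counter_atom D x)).
Proof.
  intros hx; apply proves_closed; right.
  exists (counter_default x); split; [apply inRsd_counter_default; auto|].
  split; [intros a []|].
  intros S hS; apply inR_counter_neg in hS as ->; auto.
  right; apply not_sgt_counter_refute; auto.
Qed.

Lemma proves_unbeaten_pos_sigmaS x : In x (rules D) -> unbeaten PS tdeltaS x ->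
  PS (Plus, tsigmaS, Pos (unbeaten_atom D x)).
Proof.
  intros hx hu; apply proves_closed; right.
  exists (unbeaten_default x); split; [apply inRsd_unbeaten_default; auto|].
  split; [intros a []|].
  intros S hS; apply inR_unbeaten_neg in hS as [->|[y [hy ->]]]; auto.
  - right; apply not_sgt_unbeaten_refute; auto.
  - left; exact (hu y hy).
Qed.

Lemma proves_unbeaten_neg_sigmaS x : In x (rules D) -> beaten PS tdeltaS x ->
  PS (Minus, tsigmaS, Pos (unbeaten_atom D x)).
Proof.
  intros hx [y [hy hyb]]; apply proves_closed.
  split; [apply gadget_proves_minus_Delta, unbeaten_pos_gadget; auto|].
  intros r [hr _]; apply inR_unbeaten_pos in hr as ->; auto.
  right; exists (beaten_by y x); split; [apply inRsd_beaten_by; auto|].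
  split; [exact hyb|apply beaten_by_sgt; auto; apply hy].
Qed.

Lemma someM_translate (P Q : concl -> Prop) t1 t2 R :
  (forall a, nongadget a -> P (Minus, t1, a) -> Q (Minus, t2, a)) ->
  In R (rules DA) -> someM P t1 R -> someM Q t2 R.
Proof.
  intros h hR [a [ha1 ha2]]; exists a; split; auto; apply h; auto.
  eapply DA_body_nongadget; eauto.
Qed.

Lemma allP_translate (P Q : concl -> Prop) t1 t2 R :
  (forall a, nongadget a -> P (Plus, t1, a) -> Q (Plus, t2, a)) ->
  In R (rules DA) -> allP P Plus t1 R -> allP Q Plus t2 R.
Proof. intros h hR h1 a ha; apply h; auto; eapply DA_body_nongadget; eauto. Qed.

Definition team_defeated (E : concl -> Prop) (t t' : tag) (q : literal) (s : rule) : Prop :=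
  someM E t' s \/ exists w, inRsd DA q w /\ allP E Plus t w /\ sgt DA w s.

(* An applicable superior attacker of a member is overridden by another member,
   higher in the acyclic superiority relation. *)
Lemma team_has_unbeaten_member E t t' q :
  (forall s, inR DA (compl q) s -> team_defeated E t t' q s) ->
  forall w, In w (rules D) -> is_sd w -> rhead w = q -> allP E Plus t w ->
  exists r, In r (rules D) /\ is_sd r /\ rhead r = q /\ allP E Plus t r /\ unbeaten E t' r.
Proof.
  intros hdef.
  apply (superiority_ind D (fun w => is_sd w -> rhead w = q -> allP E Plus t w -> _) (proj2 wfD)).
  intros w hw IH hwsd hwq hwb.
  destruct (classic (unbeaten E t' w)) as [hu|hnu]; [exists w; auto|].
  apply not_all_ex_not in hnu as [s hs]; apply imply_to_and in hs as [[hsD [hsw hsup]] hsn].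
  rewrite hwq in hsw.
  destruct (hdef s (inR_DA_of_D _ _ hsD hsw)) as [h|[w' [[hw' hsd'] [hb' hgt]]]];
    [contradiction|].
  destruct (sgt_DA_inv w' s (proj1 hw') (rules_D_DA _ hsD) hgt) as [hw'D [_ hw's]].
  apply (IH w'); auto; [|apply hw'].
  eapply t_trans; apply t_step; eauto.
Qed.

Lemma team_member_superior q w x : In x (rules D) -> rhead x = compl q ->
  inR DA q w -> sgt DA w x -> superior_attacker w x.
Proof.
  intros hx hxq hw hgt.
  destruct (sgt_DA_inv w x (proj1 hw) (rules_D_DA _ hx) hgt) as [hwD [_ hwx]].
  split; [|split]; auto. rewrite hxq, compl_involutive; apply hw.
Qed.

Section Forward.
Variables (t t' u u' : tag) (E : concl -> Prop).
Hypothesis star_u : star_tags u u'.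
Hypothesis E_t : forall s a, nongadget a -> E (s, t, a) -> PS (s, u, a).
Hypothesis E_t' : forall s a, nongadget a -> E (s, t', a) -> PS (s, u', a).
Hypothesis E_Delta : forall s a, nongadget a -> E (s, tDelta, a) -> PS (s, tDelta, a).
Hypothesis beaten_to_minus : forall x, In x (rules D) -> beaten PS u x ->
  PS (Minus, u', Pos (unbeaten_atom D x)).

Lemma fwd_allP R : In R (rules DA) -> allP E Plus t R -> allP PS Plus u R.
Proof. apply allP_translate; auto. Qed.
Lemma fwd_allP' R : In R (rules DA) -> allP E Plus t' R -> allP PS Plus u' R.
Proof. apply allP_translate; auto. Qed.
Lemma fwd_someM R : In R (rules DA) -> someM E t R -> someM PS u R.
Proof. apply someM_translate; auto. Qed.
Lemma fwd_someM' R : In R (rules DA) -> someM E t' R -> someM PS u' R.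
Proof. apply someM_translate; auto. Qed.

Lemma team_rule_of_defeated_fails q x : In x (rules D) -> rhead x = compl q ->
  team_defeated E t t' q x -> someM PS u' (team_rule x).
Proof.
  intros hx hxq [h|[w [hw [hwb hgt]]]].
  - apply someM_team_rule, fwd_someM'; auto using rules_D_DA.
  - exists (Pos (unbeaten_atom D x)); split; [apply unbeaten_in_team_rule|].
    apply beaten_to_minus; auto. exists w; split.
    + eapply team_member_superior; eauto; apply hw.
    + apply fwd_allP; auto; apply hw.
Qed.

Lemma team_rule_applicable q r : In r (rules D) -> rhead r = q -> allP E Plus t r ->
  unbeaten E t' r -> (forall s, inR DA (compl q) s -> team_defeated E t t' q s) ->
  allP PS Plus u (team_rule r).
Proof.
  intros hr hrq hrb hru hdef a ha.
  apply team_rule_body in ha as [ha|[->|[s [hs [hsr ->]]]]].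
  - exact (fwd_allP r (rules_D_DA _ hr) hrb a ha).
  - apply (proves_unbeaten_pos u u' star_u); auto.
    intros y hy; apply fwd_someM'; [apply rules_D_DA, hy|auto].
  - apply (proves_counter_pos u u' star_u); auto. rewrite hrq in hsr.
    destruct (hdef s (inR_DA_of_D _ _ hs hsr)) as [h|[w [hw [hwb hgt]]]].
    + left; apply fwd_someM'; auto using rules_D_DA.
    + right; exists w; split; [eapply team_member_superior; eauto; apply hw|].
      split; [apply hw|apply fwd_allP; auto; apply hw].
Qed.

Lemma plus_amb_to_star q : nongadget q -> plus_amb DA E t t' q -> PS (Plus, u, q).
Proof.
  intros hb [h|[[r0 [hr0 hr0b]] [hD hdef]]]; apply proves_closed, star_u;
    [left; apply E_Delta; auto|right].
  assert (hDc : PS (Minus, tDelta, compl q)) by (apply E_Delta; auto using nongadget_compl).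
  assert (hA : forall S, inR DA (compl q) S -> In S RA -> someM PS u' S).
  { intros S hS hSA; destruct (hdef S hS) as [h|[w [_ [_ hgt]]]].
    - apply fwd_someM'; auto; apply hS.
    - exfalso; exact (not_sgt_DA_A w S hSA hgt). }
  destruct (classic (exists w, In w (rules D) /\ is_sd w /\ rhead w = q /\ allP E Plus t w))
    as [[w [hw [hwsd [hwq hwb]]]]|hno].
  - destruct (team_has_unbeaten_member E t t' q hdef w hw hwsd hwq hwb)
      as [r [hr [hrsd [hrq [hrb hru]]]]].
    exists (team_rule r); split; [rewrite <- hrq; apply inRsd_team_rule; auto|].
    split; [eapply team_rule_applicable; eauto|split; [exact hDc|]].
    intros S hS; apply inR_SA_nongadget in hS as [hS|[x [hx [_ [hxq ->]]]]];
      auto using nongadget_compl.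
    + destruct (in_rules_DA S) as [[hSD|hSA] _]; [apply hS| |].
      * right; apply team_rule_sgt; auto.
      * left; apply hA; auto.
    + left; eapply team_rule_of_defeated_fails; eauto. apply hdef, inR_DA_of_D; auto.
  - exists r0; split; [destruct hr0; split; auto; apply inR_SA_of_DA; auto|].
    split; [apply fwd_allP; auto; apply hr0|split; [exact hDc|]].
    intros S hS; apply inR_SA_nongadget in hS as [hS|[x [hx [_ [hxq ->]]]]];
      auto using nongadget_compl.
    + destruct (hdef S hS) as [h|[w [[hw hwsd] [hwb hgt]]]].
      * left; apply fwd_someM'; auto; apply hS.
      * exfalso; apply hno; exists w.
        destruct (sgt_DA_inv w S (proj1 hw) (proj1 hS) hgt) as [hwD _].
        repeat split; auto; apply hw.
    + left; eapply team_rule_of_defeated_fails; eauto. apply hdef, inR_DA_of_D; auto.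
Qed.

Lemma minus_amb_to_star q : nongadget q -> minus_amb DA E t t' q -> PS (Minus, u, q).
Proof.
  intros hb [hD H]; apply proves_closed, star_u; split; [apply E_Delta; auto|].
  assert (hbc : nongadget (compl q)) by (apply nongadget_compl; auto).
  intros R [hR hRsd]; apply inR_SA_nongadget in hR as [hR|[x [hx [hxsd [hxq ->]]]]]; auto;
    destruct H as [H|[H|[s [hs [hsb hsw]]]]];
    try (right; left; apply E_Delta; auto; fail).
  - left; apply fwd_someM, H; [apply hR|split; auto].
  - destruct (classic (sgt DA R s)) as [hg|hg].
    + left; destruct (hsw R (conj hR hRsd)) as [h|h]; [|contradiction].
      apply fwd_someM; auto; apply hR.
    + right; right; exists s; split; [apply inR_SA_of_DA; auto|].
      split; [apply fwd_allP'; auto; apply hs|].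
      intros g; apply hg, sgt_SA_DA; auto; [apply hR|apply hs].
  - left; apply someM_team_rule, fwd_someM; [apply rules_D_DA; auto|].
    apply H; split; auto; apply inR_DA_of_D; auto.
  - destruct (in_rules_DA s) as [[hsD|hsA] _]; [apply hs| |].
    + left; exists (Pos (counter_atom D s)).
      split; [apply counter_in_team_rule; auto; rewrite hxq; apply hs|].
      apply (proves_counter_neg u u' star_u); auto.
      split; [apply fwd_allP'; auto; apply hs|].
      intros y [hy [hys hyx]] hysd.
      assert (hyq : rhead y = q) by (rewrite hys, (proj2 hs), compl_involutive; auto).
      destruct (hsw y (conj (inR_DA_of_D _ _ hy hyq) hysd)) as [h|h].
      * apply fwd_someM; auto; apply rules_D_DA; auto.
      * exfalso; apply h, sgt_of_sup; auto.
    + right; right; exists s; split; [apply inR_SA_of_DA; auto|].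
      split; [apply fwd_allP'; auto; apply hs|apply not_sgt_SA_A; auto].
Qed.
End Forward.

Section ForwardSupport.
Variable E : concl -> Prop.
Hypothesis E_sigma : forall s a, nongadget a -> E (s, tsigma, a) -> PS (s, tsigmaS, a).
Hypothesis E_delta : forall s a, nongadget a -> E (s, tdelta, a) -> PS (s, tdeltaS, a).
Hypothesis E_Delta : forall s a, nongadget a -> E (s, tDelta, a) -> PS (s, tDelta, a).

Lemma fwd_allP_sigma R : In R (rules DA) -> allP E Plus tsigma R -> allP PS Plus tsigmaS R.
Proof. apply allP_translate; auto. Qed.
Lemma fwd_someM_sigma R : In R (rules DA) -> someM E tsigma R -> someM PS tsigmaS R.
Proof. apply someM_translate; auto. Qed.
Lemma fwd_allP_delta R : In R (rules DA) -> allP E Plus tdelta R -> allP PS Plus tdeltaS R.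
Proof. apply allP_translate; auto. Qed.
Lemma fwd_someM_delta R : In R (rules DA) -> someM E tdelta R -> someM PS tdeltaS R.
Proof. apply someM_translate; auto. Qed.

Lemma plus_sup_to_star q : nongadget q -> plus_sup DA E tsigma tdelta q -> PS (Plus, tsigmaS, q).
Proof.
  intros hb [h|[r [[hr hrsd] [hrb hatt]]]]; apply proves_closed;
    [left; apply E_Delta; auto|right].
  destruct (in_rules_DA r) as [[hrD|hrA] _]; [apply hr| |].
  - exists (team_rule r); split; [destruct hr as [_ <-]; apply inRsd_team_rule; auto|].
    split; [|intros S _; right; apply not_sgt_team_rule; auto].
    intros a ha; apply team_rule_body in ha as [ha|[->|[s [hs [_ ->]]]]].
    + exact (fwd_allP_sigma r (rules_D_DA _ hrD) hrb a ha).
    + apply proves_unbeaten_pos_sigmaS; auto. intros s [hs [hsr hsx]].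
      destruct (hatt s) as [h|h].
      * apply inR_DA_of_D; auto. rewrite hsr, (proj2 hr); auto.
      * apply fwd_someM_delta; auto; apply rules_D_DA; auto.
      * exfalso; apply h, sgt_of_sup; auto.
    + apply proves_counter_pos_sigmaS; auto.
  - exists r; split; [split; [apply inR_SA_of_DA; auto|auto]|].
    split; [apply fwd_allP_sigma; auto; apply hr|].
    intros S _; right; apply not_sgt_SA_A; auto.
Qed.

Lemma minus_sup_to_star q : nongadget q -> minus_sup DA E tsigma tdelta q ->
  PS (Minus, tsigmaS, q).
Proof.
  intros hb [hD H]; apply proves_closed; split; [apply E_Delta; auto|].
  intros R [hR hRsd]; apply inR_SA_nongadget in hR as [hR|[x [hx [hxsd [hxq ->]]]]]; auto.
  - destruct (H R (conj hR hRsd)) as [h|[s [hs [hsb hsg]]]].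
    + left; apply fwd_someM_sigma; auto; apply hR.
    + right; exists s; split; [apply inR_SA_of_DA; auto|].
      split; [apply fwd_allP_delta; auto; apply hs|apply sgt_DA_SA; auto].
  - destruct (H x (conj (inR_DA_of_D _ _ hx hxq) hxsd)) as [h|[s [hs [hsb hsg]]]].
    + left; apply someM_team_rule, fwd_someM_sigma; auto; apply rules_D_DA; auto.
    + left; exists (Pos (unbeaten_atom D x)); split; [apply unbeaten_in_team_rule|].
      apply proves_unbeaten_neg_sigmaS; auto. exists s; split.
      * apply (team_member_superior (compl q)); auto.
        rewrite hxq, compl_involutive; auto.
      * apply fwd_allP_delta; auto; apply hs.
Qed.
End ForwardSupport.

Lemma forward n : forall s a, nongadget a ->
  (iterT DA n (s, tPartial, a) -> PS (s, tPartialS, a)) /\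
  (iterT DA n (s, tdelta, a) -> PS (s, tdeltaS, a)) /\
  (iterT DA n (s, tsigma, a) -> PS (s, tsigmaS, a)).
Proof.
  induction n as [|n IH]; [simpl; tauto|].
  set (E := iterT DA n).
  assert (E_Delta : forall s a, nongadget a -> E (s, tDelta, a) -> PS (s, tDelta, a)).
  { intros s a hb h; apply proves_Delta_iff; auto; exists n; auto. }
  assert (E_partial : forall s a, nongadget a -> E (s, tPartial, a) -> PS (s, tPartialS, a)).
  { intros s a hb; apply (IH s a hb). }
  assert (E_delta : forall s a, nongadget a -> E (s, tdelta, a) -> PS (s, tdeltaS, a)).
  { intros s a hb; apply (IH s a hb). }
  assert (E_sigma : forall s a, nongadget a -> E (s, tsigma, a) -> PS (s, tsigmaS, a)).
  { intros s a hb; apply (IH s a hb). }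
  pose proof (proves_unbeaten_neg _ _ star_tags_partialS).
  pose proof proves_unbeaten_neg_sigmaS.
  intros s a hb; split; [|split]; intros h; destruct s.
  - eapply (plus_amb_to_star tPartial tPartial); eauto using star_tags_partialS.
  - eapply (minus_amb_to_star tPartial tPartial); eauto using star_tags_partialS.
  - eapply (plus_amb_to_star tdelta tsigma); eauto using star_tags_deltaS.
  - eapply (minus_amb_to_star tdelta tsigma); eauto using star_tags_deltaS.
  - eapply plus_sup_to_star; eauto.
  - eapply minus_sup_to_star; eauto.
Qed.

Section BackwardGadgets.
Variable E : concl -> Prop.
Hypothesis E_no_gadget_Delta : forall a, ~ nongadget a -> ~ E (Plus, tDelta, a).

Section Star.
Variables T T' t t' : tag.
Hypothesis E_T : forall s a, nongadget a -> E (s, T, a) -> PD (s, t, a).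
Hypothesis E_T' : forall s a, nongadget a -> E (s, T', a) -> PD (s, t', a).

Lemma bwd_allP R : In R (rules DA) -> allP E Plus T R -> allP PD Plus t R.
Proof. apply allP_translate; auto. Qed.
Lemma bwd_allP' R : In R (rules DA) -> allP E Plus T' R -> allP PD Plus t' R.
Proof. apply allP_translate; auto. Qed.
Lemma bwd_someM R : In R (rules DA) -> someM E T R -> someM PD t R.
Proof. apply someM_translate; auto. Qed.
Lemma bwd_someM' R : In R (rules DA) -> someM E T' R -> someM PD t' R.
Proof. apply someM_translate; auto. Qed.

Lemma star_counter_pos x : In x (rules D) ->
  plus_star SA E T T' (Pos (counter_atom D x)) -> countered PD t t' x.
Proof.
  intros hx [h|[R [[hR _] [hRb [_ hatt]]]]];
    [exfalso; exact (E_no_gadget_Delta _ (counter_pos_gadget x hx) h)|].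
  apply inR_counter_pos in hR as [->|[y [hy [hysd ->]]]]; auto.
  - destruct (hatt (counter_refute x) (proj1 (inRsd_counter_refute x hx))) as [h|h].
    + left; apply bwd_someM'; auto using rules_D_DA.
    + exfalso; exact (not_sgt_counter_default x hx h).
  - right; exists y; split; [exact hy|split; [exact hysd|]].
    apply bwd_allP; auto. apply rules_D_DA, hy.
Qed.

Lemma star_counter_neg x : In x (rules D) ->
  minus_star SA E T T' (Pos (counter_atom D x)) -> uncountered PD t t' x.
Proof.
  intros hx [_ H]. split.
  - destruct (H (counter_default x)) as [[a [[] _]]|[h|[S [hS [hSb _]]]]];
      [apply inRsd_counter_default; auto| |].
    + exfalso; exact (E_no_gadget_Delta _ (counter_neg_gadget x hx) h).
    + apply inR_counter_neg in hS as ->; auto. apply bwd_allP'; auto using rules_D_DA.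
  - intros y hy hysd.
    destruct (H (counter_by y x)) as [h|[h|[S [hS [_ hg]]]]]; [apply inRsd_counter_by; auto| | |].
    + apply bwd_someM; auto. apply rules_D_DA, hy.
    + exfalso; exact (E_no_gadget_Delta _ (counter_neg_gadget x hx) h).
    + apply inR_counter_neg in hS as ->; auto.
      exfalso; apply hg, counter_by_sgt; auto; apply hy.
Qed.

Lemma star_unbeaten_pos x : In x (rules D) ->
  plus_star SA E T T' (Pos (unbeaten_atom D x)) -> unbeaten PD t' x.
Proof.
  intros hx [h|[R [[hR _] [_ [_ hatt]]]]];
    [exfalso; exact (E_no_gadget_Delta _ (unbeaten_pos_gadget x hx) h)|].
  apply inR_unbeaten_pos in hR as ->; auto.
  intros y hy; destruct (hatt (beaten_by y x) (proj1 (inRsd_beaten_by y x hx hy))) as [h|h].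
  - apply bwd_someM'; auto. apply rules_D_DA, hy.
  - exfalso; exact (not_sgt_unbeaten_default y x hx (proj1 hy) h).
Qed.

Lemma star_unbeaten_neg x : In x (rules D) ->
  minus_star SA E T T' (Pos (unbeaten_atom D x)) -> beaten PD t' x.
Proof.
  intros hx [_ H].
  destruct (H (unbeaten_default x)) as [[a [[] _]]|[h|[S [hS [hSb hg]]]]];
    [apply inRsd_unbeaten_default; auto| |].
  - exfalso; exact (E_no_gadget_Delta _ (unbeaten_neg_gadget x hx) h).
  - apply inR_unbeaten_neg in hS as [->|[y [hy ->]]]; auto.
    + exfalso; apply hg, unbeaten_default_sgt; auto.
    + exists y; split; auto. apply bwd_allP'; auto. apply rules_D_DA, hy.
Qed.
End Star.

Hypothesis E_deltaS : forall s a, nongadget a -> E (s, tdeltaS, a) -> PD (s, tdelta, a).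

Lemma sup_unbeaten_pos x : In x (rules D) ->
  plus_sup SA E tsigmaS tdeltaS (Pos (unbeaten_atom D x)) -> unbeaten PD tdelta x.
Proof.
  intros hx [h|[R [[hR _] [_ hatt]]]];
    [exfalso; exact (E_no_gadget_Delta _ (unbeaten_pos_gadget x hx) h)|].
  apply inR_unbeaten_pos in hR as ->; auto.
  intros y hy; destruct (hatt (beaten_by y x) (proj1 (inRsd_beaten_by y x hx hy))) as [h|h].
  - apply (someM_translate E PD tdeltaS tdelta); auto. apply rules_D_DA, hy.
  - exfalso; apply h, beaten_by_sgt; auto; apply hy.
Qed.

Lemma sup_unbeaten_neg x : In x (rules D) ->
  minus_sup SA E tsigmaS tdeltaS (Pos (unbeaten_atom D x)) -> beaten PD tdelta x.
Proof.
  intros hx [_ H].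
  destruct (H (unbeaten_default x)) as [[a [[] _]]|[S [hS [hSb hg]]]];
    [apply inRsd_unbeaten_default; auto|].
  apply inR_unbeaten_neg in hS as [->|[y [hy ->]]]; auto.
  - exfalso; exact (not_sgt_unbeaten_refute x hx hg).
  - exists y; split; auto. apply (allP_translate E PD tdeltaS tdelta); auto.
    apply rules_D_DA, hy.
Qed.

Lemma sup_counter_not_minus x : In x (rules D) ->
  ~ minus_sup SA E tsigmaS tdeltaS (Pos (counter_atom D x)).
Proof.
  intros hx [_ H].
  destruct (H (counter_default x)) as [[a [[] _]]|[S [hS [_ hg]]]];
    [apply inRsd_counter_default; auto|].
  apply inR_counter_neg in hS as ->; auto. exact (not_sgt_counter_refute x hx hg).
Qed.
End BackwardGadgets.

Section Backward.
Variables (t t' u u' : tag) (E : concl -> Prop).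
Hypothesis E_u : forall s a, nongadget a -> E (s, u, a) -> PD (s, t, a).
Hypothesis E_u' : forall s a, nongadget a -> E (s, u', a) -> PD (s, t', a).
Hypothesis E_Delta : forall s a, nongadget a -> E (s, tDelta, a) -> PD (s, tDelta, a).
Hypothesis E_counter_pos : forall x, In x (rules D) ->
  E (Plus, u, Pos (counter_atom D x)) -> countered PD t t' x.
Hypothesis E_counter_neg : forall x, In x (rules D) ->
  E (Minus, u, Pos (counter_atom D x)) -> uncountered PD t t' x.
Hypothesis E_unbeaten_pos : forall x, In x (rules D) ->
  E (Plus, u', Pos (unbeaten_atom D x)) -> unbeaten PD t x.
Hypothesis E_unbeaten_neg : forall x, In x (rules D) ->
  E (Minus, u, Pos (unbeaten_atom D x)) -> beaten PD t' x.

Lemma plus_star_to_amb q : nongadget q -> plus_star SA E u u' q -> plus_amb DA PD t t' q.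
Proof.
  intros hb [h|[R [[hR hRsd] [hRb [hD hatt]]]]]; [left; apply E_Delta; auto|right].
  assert (hbc : nongadget (compl q)) by (apply nongadget_compl; auto).
  apply inR_SA_nongadget in hR as [hR|[x [hx [hxsd [hxq ->]]]]]; auto.
  - split; [exists R; split; [split; auto|apply (bwd_allP E u t); auto; apply hR]|].
    split; [apply E_Delta; auto|].
    intros s hs; destruct (hatt s (inR_SA_of_DA _ _ hs)) as [h|h].
    + left; apply (bwd_someM' E u' t'); auto; apply hs.
    + right; exists R; split; [split; auto|].
      split; [apply (bwd_allP E u t); auto; apply hR|].
      apply sgt_SA_DA; auto; [apply hR|apply hs].
  - split; [exists x; split; [split; auto; apply inR_DA_of_D; auto|]|].
    { apply (bwd_allP E u t); [auto|apply rules_D_DA; auto|apply allP_of_team_rule; auto]. }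
    split; [apply E_Delta; auto|].
    intros s hs; destruct (in_rules_DA s) as [[hsD|hsA] _]; [apply hs| |].
    + assert (hsx : rhead s = compl (rhead x)) by (rewrite hxq; apply hs).
      destruct (E_counter_pos s hsD) as [h|[y [[hy [hys hyx]] [hysd hyb]]]];
        [apply hRb, counter_in_team_rule; auto|left; auto|right].
      exists y; split; [split; auto; apply inR_DA_of_D; auto|].
      * rewrite hys, hsx, compl_involutive; auto.
      * split; auto; apply sgt_of_sup; auto.
    + destruct (hatt s (inR_SA_of_DA _ _ hs)) as [h|h].
      * left; apply (bwd_someM' E u' t'); auto; apply hs.
      * exfalso; exact (not_sgt_SA_A _ _ hsA h).
Qed.

Section Attacked.
Variable q : literal.
Hypothesis hq : nongadget q.
Hypothesis star_att : forall R, inRsd SA q R -> someM E u R \/ E (Plus, tDelta, compl q) \/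
  exists S, inR SA (compl q) S /\ allP E Plus u' S /\ ~ sgt SA R S.

Definition unrefuted_attack : Prop :=
  exists s, inR DA (compl q) s /\ allP PD Plus t' s /\
    forall w, inRsd DA q w -> someM PD t w \/ ~ sgt DA w s.

Lemma unrefuted_attack_intro S : inR DA (compl q) S -> allP PD Plus t' S ->
  (forall w, In w (rules D) -> is_sd w -> rhead w = q -> sgt DA w S -> someM PD t w) ->
  unrefuted_attack.
Proof.
  intros hS hSb h. exists S; split; auto; split; auto.
  intros w [hw hwsd]. destruct (classic (sgt DA w S)) as [g|g]; auto.
  left; destruct (sgt_DA_inv w S (proj1 hw) (proj1 hS) g) as [hwD _].
  apply h; auto; apply hw.
Qed.

Lemma unrefuted_attack_A S : In S RA -> inR DA (compl q) S -> allP E Plus u' S ->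
  unrefuted_attack.
Proof.
  intros hSA hS hSb; apply (unrefuted_attack_intro S); auto.
  - apply (bwd_allP' E u' t'); auto; apply hS.
  - intros w _ _ _ g; exfalso; exact (not_sgt_DA_A _ _ hSA g).
Qed.

Lemma unrefuted_attack_team_rule y : In y (rules D) -> rhead y = compl q ->
  allP E Plus u' (team_rule y) -> unrefuted_attack.
Proof.
  intros hy hyq hb. apply (unrefuted_attack_intro y); [apply inR_DA_of_D; auto| |].
  - apply (bwd_allP' E u' t'); [auto|apply rules_D_DA; auto|apply allP_of_team_rule; auto].
  - intros w hw hwsd hwq g. apply (E_unbeaten_pos y hy); [apply hb, unbeaten_in_team_rule|].
    split; [auto|split]; [rewrite hyq, hwq, compl_involutive; auto|].
    destruct (sgt_DA_inv w y (rules_D_DA _ hw) (rules_D_DA _ hy) g); tauto.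
Qed.

(* Induction up the superiority relation: an applicable rule for [q] whose team
   rule is defeated points to a superior applicable rule or to an unrefuted
   attack. *)
Lemma applicable_rule_attacked : forall x, In x (rules D) -> is_sd x -> rhead x = q ->
  ~ someM PD t x -> PD (Plus, tDelta, compl q) \/ unrefuted_attack.
Proof.
  assert (hqc : nongadget (compl q)) by (apply nongadget_compl; auto).
  apply (superiority_ind D (fun x => is_sd x -> rhead x = q -> ~ someM PD t x -> _) (proj2 wfD)).
  intros x hx IH hxsd hxq hnf.
  destruct (star_att (team_rule x)) as [[a [ha hea]]|[h|[S [hS [hSb hSg]]]]];
    [rewrite <- hxq; apply inRsd_team_rule; auto| | |].
  - apply team_rule_body in ha as [ha|[->|[s [hs [hsx ->]]]]].
    + exfalso; apply hnf; exists a; split; auto.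
      apply E_u; auto; eapply DA_body_nongadget; eauto using rules_D_DA.
    + destruct (E_unbeaten_neg x hx hea) as [y [[hy [hyx hysup]] hyb]].
      destruct (classic (exists w, In w (rules D) /\ is_sd w /\ rhead w = q /\
                   In (rlabel w, rlabel y) (sup D) /\ ~ someM PD t w))
        as [[w [hw [hwsd [hwq [hwy hwn]]]]]|hno].
      * apply (IH w hw); auto. eapply t_trans; apply t_step; eauto.
      * right; apply (unrefuted_attack_intro y); auto;
          [apply inR_DA_of_D; auto; rewrite hyx, hxq; auto|].
        intros w hw hwsd hwq g. destruct (classic (someM PD t w)) as [|n]; auto.
        exfalso; apply hno; exists w; repeat split; auto.
        destruct (sgt_DA_inv w y (rules_D_DA _ hw) (rules_D_DA _ hy) g); tauto.
    + destruct (E_counter_neg s hs hea) as [hsb hsw].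
      right; apply (unrefuted_attack_intro s); auto;
        [apply inR_DA_of_D; auto; rewrite hsx, hxq; auto|].
      intros w hw hwsd hwq g. apply hsw; auto. split; [auto|split].
      * rewrite hwq, hsx, hxq, compl_involutive; auto.
      * destruct (sgt_DA_inv w s (rules_D_DA _ hw) (rules_D_DA _ hs) g); tauto.
  - left; apply E_Delta; auto.
  - right; apply inR_SA_nongadget in hS as [hS|[y [hy [_ [hyq ->]]]]]; auto.
    + destruct (in_rules_DA S) as [[hSD|hSA] _]; [apply hS| |].
      * exfalso; apply hSg, team_rule_sgt; auto.
      * apply (unrefuted_attack_A S); auto.
    + apply (unrefuted_attack_team_rule y); auto.
Qed.

Lemma minus_amb_of_attacks : PD (Minus, tDelta, q) -> minus_amb DA PD t t' q.
Proof.
  assert (hqc : nongadget (compl q)) by (apply nongadget_compl; auto).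
  intros hD; split; auto.
  destruct (classic (PD (Plus, tDelta, compl q))) as [hp|hnp]; [right; left; auto|].
  destruct (classic (forall r, inRsd DA q r -> someM PD t r)) as [hall|hn]; [left; auto|].
  right; right.
  apply not_all_ex_not in hn as [r hr]; apply imply_to_and in hr as [[hr hrsd] hrn].
  destruct (in_rules_DA r) as [[hrD|hrA] _]; [apply hr| |].
  { destruct (applicable_rule_attacked r hrD hrsd (proj2 hr) hrn); [contradiction|auto]. }
  destruct (star_att r) as [h|[h|[S [hS [hSb hSg]]]]]; [split; auto; apply inR_SA_of_DA; auto| | |].
  - exfalso; apply hrn, (bwd_someM E u t); auto; apply hr.
  - exfalso; apply hnp, E_Delta; auto.
  - apply inR_SA_nongadget in hS as [hS|[y [hy [_ [hyq ->]]]]]; auto.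
    + destruct (in_rules_DA S) as [[hSD|hSA] _]; [apply hS| |].
      * destruct (classic (exists w, In w (rules D) /\ is_sd w /\ rhead w = q /\
                   sgt DA w S /\ ~ someM PD t w)) as [[w [hw [hwsd [hwq [_ hwn]]]]]|hno].
        -- destruct (applicable_rule_attacked w hw hwsd hwq hwn); [contradiction|auto].
        -- apply (unrefuted_attack_intro S); auto; [apply (bwd_allP' E u' t'); auto; apply hS|].
           intros w hw hwsd hwq g. destruct (classic (someM PD t w)) as [|n]; auto.
           exfalso; apply hno; exists w; auto.
      * apply (unrefuted_attack_A S); auto.
    + apply (unrefuted_attack_team_rule y); auto.
Qed.
End Attacked.

Lemma minus_star_to_amb q : nongadget q -> minus_star SA E u u' q -> minus_amb DA PD t t' q.
Proof. intros hq [hD hatt]; apply (minus_amb_of_attacks q hq hatt), E_Delta; auto. Qed.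
End Backward.

Section BackwardSupport.
Variable E : concl -> Prop.
Hypothesis E_sigmaS : forall s a, nongadget a -> E (s, tsigmaS, a) -> PD (s, tsigma, a).
Hypothesis E_deltaS : forall s a, nongadget a -> E (s, tdeltaS, a) -> PD (s, tdelta, a).
Hypothesis E_Delta : forall s a, nongadget a -> E (s, tDelta, a) -> PD (s, tDelta, a).
Hypothesis E_unbeaten_pos : forall x, In x (rules D) ->
  E (Plus, tsigmaS, Pos (unbeaten_atom D x)) -> unbeaten PD tdelta x.
Hypothesis E_unbeaten_neg : forall x, In x (rules D) ->
  E (Minus, tsigmaS, Pos (unbeaten_atom D x)) -> beaten PD tdelta x.
Hypothesis E_counter_not_minus : forall x, In x (rules D) ->
  ~ E (Minus, tsigmaS, Pos (counter_atom D x)).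

Lemma plus_sup_to_plain q : nongadget q -> plus_sup SA E tsigmaS tdeltaS q ->
  plus_sup DA PD tsigma tdelta q.
Proof.
  intros hb [h|[R [[hR hRsd] [hRb hatt]]]]; [left; apply E_Delta; auto|right].
  apply inR_SA_nongadget in hR as [hR|[x [hx [hxsd [hxq ->]]]]]; auto.
  - exists R; split; [split; auto|].
    split; [apply (bwd_allP E tsigmaS tsigma); auto; apply hR|].
    intros s hs; destruct (hatt s (inR_SA_of_DA _ _ hs)) as [h|h].
    + left; apply (bwd_someM' E tdeltaS tdelta); auto; apply hs.
    + right; intros g; apply h, sgt_DA_SA; auto.
  - exists x; split; [split; auto; apply inR_DA_of_D; auto|].
    split; [apply (bwd_allP E tsigmaS tsigma); auto using rules_D_DA, allP_of_team_rule|].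
    intros s hs; destruct (classic (sgt DA s x)) as [g|g]; auto. left.
    apply (E_unbeaten_pos x hx (hRb _ (unbeaten_in_team_rule x))).
    apply (team_member_superior (compl q) s x hx); auto.
    rewrite hxq, compl_involutive; auto.
Qed.

Lemma minus_sup_to_plain q : nongadget q -> minus_sup SA E tsigmaS tdeltaS q ->
  minus_sup DA PD tsigma tdelta q.
Proof.
  intros hb [hD hatt]; split; [apply E_Delta; auto|].
  intros r [hr hrsd]; destruct (in_rules_DA r) as [[hrD|hrA] _]; [apply hr| |].
  - destruct (hatt (team_rule r)) as [[a [ha hea]]|[S [_ [_ g]]]];
      [rewrite <- (proj2 hr); apply inRsd_team_rule; auto| |].
    + apply team_rule_body in ha as [ha|[->|[s [hs [_ ->]]]]].
      * left; exists a; split; auto.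
        apply E_sigmaS; auto; eapply DA_body_nongadget; eauto using rules_D_DA.
      * destruct (E_unbeaten_neg r hrD hea) as [y [[hy [hyr hyx]] hyb]].
        right; exists y; split; [apply inR_DA_of_D; auto; rewrite hyr, (proj2 hr); auto|].
        split; auto; apply sgt_of_sup; auto.
      * exfalso; exact (E_counter_not_minus s hs hea).
    + exfalso; exact (not_sgt_team_rule S r hrD g).
  - destruct (hatt r) as [h|[S [_ [_ g]]]]; [split; auto; apply inR_SA_of_DA; auto| |].
    + left; apply (bwd_someM E tsigmaS tsigma); auto; apply hr.
    + exfalso; exact (not_sgt_SA_A _ _ hrA g).
Qed.
End BackwardSupport.

Definition unstar_holds (s : sign) (tg : tag) (a : literal) : Prop :=
  match tg with
  | tPartialS => PD (s, tPartial, a)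
  | tdeltaS => PD (s, tdelta, a)
  | tsigmaS => PD (s, tsigma, a)
  | _ => True
  end.

Definition counter_meaning (x : rule) (s : sign) (tg : tag) : Prop :=
  match tg, s with
  | tPartialS, Plus => countered PD tPartial tPartial x
  | tPartialS, Minus => uncountered PD tPartial tPartial x
  | tdeltaS, Plus => countered PD tdelta tsigma x
  | tdeltaS, Minus => uncountered PD tdelta tsigma x
  | tsigmaS, Minus => False
  | _, _ => True
  end.

Definition unbeaten_meaning (x : rule) (s : sign) (tg : tag) : Prop :=
  match tg, s with
  | tPartialS, Plus => unbeaten PD tPartial x
  | tPartialS, Minus => beaten PD tPartial x
  | tdeltaS, Plus => unbeaten PD tsigma x
  | tdeltaS, Minus => beaten PD tsigma x
  | tsigmaS, Plus => unbeaten PD tdelta x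
  | tsigmaS, Minus => beaten PD tdelta x
  | _, _ => True
  end.

Definition backward_invariant (c : concl) : Prop :=
  let '(s, tg, a) := c in
  (nongadget a -> unstar_holds s tg a) /\
  (forall x, In x (rules D) -> a = Pos (counter_atom D x) -> counter_meaning x s tg) /\
  (forall x, In x (rules D) -> a = Pos (unbeaten_atom D x) -> unbeaten_meaning x s tg).

Lemma backward_step (E : concl -> Prop) :
  (forall c, E c -> backward_invariant c) ->
  (forall s a, nongadget a -> E (s, tDelta, a) -> PD (s, tDelta, a)) ->
  (forall a, ~ nongadget a -> ~ E (Plus, tDelta, a)) ->
  forall c, TD SA E c -> backward_invariant c.
Proof.
  intros IH E_Delta E_no_Delta.
  assert (E_partialS : forall s a, nongadget a -> E (s, tPartialS, a) -> PD (s, tPartial, a)).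
  { intros s a hb h; exact (proj1 (IH _ h) hb). }
  assert (E_deltaS : forall s a, nongadget a -> E (s, tdeltaS, a) -> PD (s, tdelta, a)).
  { intros s a hb h; exact (proj1 (IH _ h) hb). }
  assert (E_sigmaS : forall s a, nongadget a -> E (s, tsigmaS, a) -> PD (s, tsigma, a)).
  { intros s a hb h; exact (proj1 (IH _ h) hb). }
  assert (E_counter : forall s tg x, In x (rules D) ->
            E (s, tg, Pos (counter_atom D x)) -> counter_meaning x s tg).
  { intros s tg x hx h; exact (proj1 (proj2 (IH _ h)) x hx eq_refl). }
  assert (E_unbeaten : forall s tg x, In x (rules D) ->
            E (s, tg, Pos (unbeaten_atom D x)) -> unbeaten_meaning x s tg).
  { intros s tg x hx h; exact (proj2 (proj2 (IH _ h)) x hx eq_refl). }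
  intros [[s tg] a] h; split; [|split].
  - intros hb; destruct tg; simpl; auto; apply proves_closed; destruct s; simpl in h |- *;
    [ eapply (plus_star_to_amb tPartial tPartial tPartialS tPartialS E)
    | eapply (minus_star_to_amb tPartial tPartial tPartialS tPartialS E)
    | eapply (plus_star_to_amb tdelta tsigma tdeltaS tsigmaS E)
    | eapply (minus_star_to_amb tdelta tsigma tdeltaS tsigmaS E)
    | eapply plus_sup_to_plain
    | eapply minus_sup_to_plain ];
    first [ eassumption
          | intros x hx hh; exact (E_counter _ _ _ hx hh)
          | intros x hx hh; exact (E_unbeaten _ _ _ hx hh) ].
  - intros x hx ->; destruct tg, s; simpl; auto; simpl in h.
    + eapply star_counter_pos; eauto.
    + eapply star_counter_neg; eauto.
    + eapply star_counter_pos; eauto.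
    + eapply star_counter_neg; eauto.
    + eapply sup_counter_not_minus; eauto.
  - intros x hx ->; destruct tg, s; simpl; auto; simpl in h.
    + eapply star_unbeaten_pos; eauto.
    + eapply star_unbeaten_neg; eauto.
    + eapply star_unbeaten_pos; eauto.
    + eapply star_unbeaten_neg; eauto.
    + eapply sup_unbeaten_pos; eauto.
    + eapply sup_unbeaten_neg; eauto.
Qed.

Lemma backward n : forall c, iterT SA n c -> backward_invariant c.
Proof.
  induction n as [|n IH]; [intros c []|].
  apply backward_step; auto.
  - intros s a hb h; apply proves_Delta_iff; auto; exists n; auto.
  - intros a hb; apply gadget_no_plus_Delta; auto.
Qed.

Lemma Sigma_DA_nongadget q : In q (Sigma DA) -> nongadget q.
Proof.
  unfold Sigma; simpl; rewrite app_nil_r, flat_map_app, !in_app_iff.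
  intros [h|[h|h]]; [apply Sigma_nongadget|apply Sigma_nongadget|apply SigmaA_nongadget];
    apply in_or_app; auto.
Qed.

Lemma simulation_partial q s : In q (Sigma DA) ->
  (PD (s, tPartial, q) <-> PS (s, tPartialS, q)).
Proof.
  intros hq; pose proof (Sigma_DA_nongadget q hq) as hb; split; intros [n h].
  - exact (proj1 (forward n s q hb) h).
  - exact (proj1 (backward n _ h) hb).
Qed.

Lemma simulation_delta q s : In q (Sigma DA) ->
  (PD (s, tdelta, q) <-> PS (s, tdeltaS, q)).
Proof.
  intros hq; pose proof (Sigma_DA_nongadget q hq) as hb; split; intros [n h].
  - exact (proj1 (proj2 (forward n s q hb)) h).
  - exact (proj1 (backward n _ h) hb).
Qed.
End Simulation.

Theorem theorem14 :
  simulates tPartial tPartialS /\ simulates tdelta tdeltaS.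
Proof.
  split; intros D wfD; exists (star_theory D); split; auto using star_theory_wf;
    intros RA A _ modA q hq; split.
  - exact (simulation_partial D wfD RA modA q Plus hq).
  - exact (simulation_partial D wfD RA modA q Minus hq).
  - exact (simulation_delta D wfD RA modA q Plus hq).
  - exact (simulation_delta D wfD RA modA q Minus hq).
Qed.
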